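(* Let $\theta$ be an irrational number whose best rational approximants $(p_n/q_n)_{n\ge0}$ satisfy $\lim_{n\to\infty} q_n^{-1}\log q_{n+1}=+\infty$. Let $S$ be a countable dense subset of $\mathbb{C}\times\{z\in\mathbb{C}: |z|>1\}$. Then there exist a subsequence $q'=(q'_n)_{n\ge0}$ of $(q_n)_{n\ge0}$ and a dense $G_\delta$-subset $E_2\subset l^\infty$ such that for every $u\in E_2$, the map $A_{\theta,q',u}$ is a holomorphic automorphism of $\mathbb{C}^2$ with the following properties: (i) $A_{\theta,q',u}$ maps $\mathbb{C}\times\Delta$ onto itself and is holomorphically conjugate on $\mathbb{C}\times\Delta$ to the rotation $R_\theta(w,z)=(e^{2\pi i\theta}w,e^{2\pi i\theta}z)$, i.e. there is a biholomorphism $\Psi$ of $\mathbb{C}\times\Delta$ with $A_{\theta,q',u}=\Psi^{-1}\circ R_\theta\circ\Psi$ there; (ii) for every $(w,z)\in\mathbb{C}\times\{|z|>1\}$ the forward orbit $(A_{\theta,q',u}^{\circ N}(w,z))_{N\ge0}$ is unbounded and recurrent (i.e. $\liminf_{N\to\infty}\|A_{\theta,q',u}^{\circ N}(w,z)-(w,z)\|=0$); (iii) for every $(w,z)\in S$, the sequence $(\|\mathrm{D}A_{\theta,q',u}^{\circ N}(w,z)\|)_{N\ge0}$ is unbounded.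
   Context: For an irrational real $\theta=a_0+\cfrac{1}{a_1+\cfrac{1}{a_2+\cdots}}$ (with $a_0\in\mathbb{Z}$, $a_i\ge1$ integers for $i\ge1$), the best rational approximants are $p_n/q_n=a_0+\cfrac{1}{a_1+\cdots+\cfrac{1}{a_n}}$, $n\ge0$, with $\gcd(p_n,q_n)=1$ and $q_n\ge0$; equivalently $p_{-2}=q_{-1}=0$, $p_{-1}=q_{-2}=1$, $q_{n+1}=a_{n+1}q_n+q_{n-1}$, $p_{n+1}=a_{n+1}p_n+p_{n-1}$. A subsequence $q'=(q'_n)_{n\ge0}$ of $(q_n)$ means $q'_n=q_{k_n}$ for a strictly increasing sequence of indices $k_n$. $l^\infty$ is the complex Banach space of bounded complex sequences $u=(u_m)_{m\ge0}$ with norm $\|u\|_\infty=\sup_m|u_m|$. $\Delta=\{z\in\mathbb{C}:|z|<1\}$. For $\mu\in\mathbb{R}$, a subsequence $q'$ and $u\in l^\infty$, define the power series $\varphi_{\mu,q',u}(z)=z e^{2\pi i\mu}\sum_{n=0}^\infty u_{q'_n}(1-e^{2\pi i q'_n\mu})z^{q'_n}$ (here $u_{q'_n}$ is the $q'_n$-th term of $u$), and $A_{\mu,q',u}(w,z)=(e^{2\pi i\mu}w+\varphi_{\mu,q',u}(z),\,e^{2\pi i\mu}z)$ wherever the series converges. *)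

From Stdlib Require Import Reals Lra Lia ZArith.
Open Scope R_scope.

Definition CC : Type := (R * R)%type.
Definition Cre (z : CC) : R := fst z.
Definition Cim (z : CC) : R := snd z.
Definition C0 : CC := (0, 0).
Definition C1 : CC := (1, 0).
Definition Cadd (a b : CC) : CC := (fst a + fst b, snd a + snd b).
Definition Copp (a : CC) : CC := (- fst a, - snd a).
Definition Csub (a b : CC) : CC := Cadd a (Copp b).
Definition Cmul (a b : CC) : CC :=
  (fst a * fst b - snd a * snd b, fst a * snd b + snd a * fst b).
Fixpoint Cpow (a : CC) (n : nat) : CC :=
  match n with O => C1 | S m => Cmul a (Cpow a m) end.
Definition Cnorm (a : CC) : R := sqrt (fst a * fst a + snd a * snd a).
Definition Ce (t : R) : CC := (cos (2 * PI * t), sin (2 * PI * t)).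

Fixpoint Csum (c : nat -> CC) (N : nat) : CC :=
  match N with O => C0 | S M => Cadd (Csum c M) (c M) end.

Definition Ccv (s : nat -> CC) (l : CC) : Prop :=
  forall eps : R, eps > 0 -> exists N : nat, forall n : nat, (n >= N)%nat ->
    Cnorm (Csub (s n) l) < eps.

Definition C2 : Type := (CC * CC)%type.
Definition C2add (p q : C2) : C2 := (Cadd (fst p) (fst q), Cadd (snd p) (snd q)).
Definition C2sub (p q : C2) : C2 := (Csub (fst p) (fst q), Csub (snd p) (snd q)).
Definition C2norm (p : C2) : R :=
  sqrt (Cnorm (fst p) * Cnorm (fst p) + Cnorm (snd p) * Cnorm (snd p)).

(** complex 2x2 matrices ((a, b), (c, d)) acting on column vectors *)
Definition Mat2 : Type := ((CC * CC) * (CC * CC))%type.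
Definition Mat2_apply (L : Mat2) (h : C2) : C2 :=
  (Cadd (Cmul (fst (fst L)) (fst h)) (Cmul (snd (fst L)) (snd h)),
   Cadd (Cmul (fst (snd L)) (fst h)) (Cmul (snd (snd L)) (snd h))).
(** Frobenius norm of a 2x2 complex matrix (equivalent to the operator norm) *)
Definition Mat2_norm (L : Mat2) : R :=
  sqrt (Cnorm (fst (fst L)) ^ 2 + Cnorm (snd (fst L)) ^ 2
      + Cnorm (fst (snd L)) ^ 2 + Cnorm (snd (snd L)) ^ 2).

Definition has_cderiv (F : C2 -> C2) (p : C2) (L : Mat2) : Prop :=
  forall eps : R, eps > 0 -> exists delta : R, delta > 0 /\
    forall h : C2, 0 < C2norm h < delta ->
      C2norm (C2sub (C2sub (F (C2add p h)) (F p)) (Mat2_apply L h))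
        <= eps * C2norm h.

Definition open_C2 (U : C2 -> Prop) : Prop :=
  forall p, U p -> exists r, r > 0 /\ forall q, C2norm (C2sub q p) < r -> U q.

Definition holomorphic_on (U : C2 -> Prop) (F : C2 -> C2) : Prop :=
  forall p, U p -> exists L : Mat2, has_cderiv F p L.

Definition holo_automorphism_C2 (F : C2 -> C2) : Prop :=
  holomorphic_on (fun _ => True) F /\
  exists G : C2 -> C2, holomorphic_on (fun _ => True) G /\
    (forall p, G (F p) = p) /\ (forall p, F (G p) = p).

Definition biholo_of (U : C2 -> Prop) (Psi Phi : C2 -> C2) : Prop :=
  (forall p, U p -> U (Psi p)) /\ (forall p, U p -> U (Phi p)) /\
  (forall p, U p -> Phi (Psi p) = p) /\ (forall p, U p -> Psi (Phi p) = p) /\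
  holomorphic_on U Psi /\ holomorphic_on U Phi.

Definition CxDisk (p : C2) : Prop := Cnorm (snd p) < 1.
Definition CxOut (p : C2) : Prop := Cnorm (snd p) > 1.

(** floor, via Int_part (Int_part r = up r - 1 = floor r) *)
Definition floorZ (r : R) : Z := Int_part r.

Fixpoint cf_rem (theta : R) (n : nat) : R :=
  match n with
  | O => theta - IZR (floorZ theta)
  | S m => / cf_rem theta m - IZR (floorZ (/ cf_rem theta m))
  end.

Definition cf_a (theta : R) (n : nat) : Z :=
  match n with
  | O => floorZ theta
  | S m => floorZ (/ cf_rem theta m)
  end.

(** (q_n, q_{n-1}), with q_{-1} = 0, q_{-2} = 1, q_{n+1} = a_{n+1} q_n + q_{n-1} *)
Fixpoint cf_qpair (theta : R) (n : nat) : (Z * Z)%type :=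
  match n with
  | O => (1%Z, 0%Z)
  | S m => let '(q, q') := cf_qpair theta m in
           ((cf_a theta (S m) * q + q')%Z, q)
  end.

(** denominators q_n of the best rational approximants of theta *)
Definition cf_q (theta : R) (n : nat) : Z := fst (cf_qpair theta n).

Definition irrational (theta : R) : Prop :=
  forall (p q : Z), q <> 0%Z -> theta <> IZR p / IZR q.

Definition linf (u : nat -> CC) : Prop := exists M : R, forall m, Cnorm (u m) <= M.

Definition linf_open (O : (nat -> CC) -> Prop) : Prop :=
  (forall u, O u -> linf u) /\
  forall u, O u -> exists r, r > 0 /\
    forall v, linf v -> (forall m, Cnorm (Csub (v m) (u m)) < r) -> O v.

Definition linf_dense (E : (nat -> CC) -> Prop) : Prop :=
  (forall u, E u -> linf u) /\
  forall v, linf v -> forall eps, eps > 0 ->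
    exists u, E u /\ forall m, Cnorm (Csub (u m) (v m)) < eps.

Definition linf_Gdelta (E : (nat -> CC) -> Prop) : Prop :=
  exists O : nat -> (nat -> CC) -> Prop,
    (forall j, linf_open (O j)) /\ forall u, E u <-> (forall j, O j u).

(** n-th term of the series for phi_{mu,q',u}(z) (without the prefactor z e^{2 pi i mu}) *)
Definition phi_term (mu : R) (q' : nat -> nat) (u : nat -> CC) (z : CC) (n : nat) : CC :=
  Cmul (Cmul (u (q' n)) (Csub C1 (Ce (INR (q' n) * mu)))) (Cpow z (q' n)).

(** A_{mu,q',u}, given the value phi of the series *)
Definition A_map (mu : R) (phi : CC -> CC) (p : C2) : C2 :=
  (Cadd (Cmul (Ce mu) (fst p)) (phi (snd p)), Cmul (Ce mu) (snd p)).

Definition Rot (theta : R) (p : C2) : C2 :=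
  (Cmul (Ce theta) (fst p), Cmul (Ce theta) (snd p)).

(* A^N is again a skew product (w, z) |-> (lambda^N (w + F_N z), lambda^N z),
   where F_N is a lacunary series with coefficients u_{Q_n} (1 - lambda^{N Q_n}),
   Q_n = q_{k_n} and lambda = e^{2 pi i theta}.  Choosing k_n so that
   lambda^{Q_n} = e^{2 pi i delta_n} with |delta_n| <= (4 (n + 1))^{-Q_n}, the
   coefficients are so small that every F_N is entire, and on C x Delta the
   map (w, z) |-> (w + sum_n u_{Q_n} z^{Q_n + 1}, z) conjugates A to the
   rotation.  For |z| > 1, N = Q_j makes all coefficients tiny, so A^{Q_j} is
   close to the identity (recurrence).  On the residual set of u with
   |u_{Q_j}| > 1 / (j + 1) infinitely often, N ~ 1 / (6 |delta_j|) makes the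
   j-th coefficient of F_N of size 1 / (j + 1) while the earlier ones are
   negligible against z^{Q_j} (because Q_j is huge compared with Q_{j-1}) and
   the later ones are small (because N delta_n is small), so A^N and its
   derivative are large. *)

From Coquelicot Require Import Coquelicot.
From Stdlib Require Import Reals ZArith Lra Lia.
From Stdlib Require Import ClassicalEpsilon FunctionalExtensionality.
From Pilot Require Import Defs.
Open Scope R_scope.

(** * Complex numbers *)

(* The operations of [Defs] are convertible to Coquelicot's, whose field
   structure lets [ring] treat every other subterm as an atom. *)
Lemma C_eq_of_sub_0 (x y : Complex.C) : Cminus x y = 0 -> x = y.
Proof. intros H. replace x with (Cplus (Cminus x y) y) by ring. rewrite H. ring. Qed.

Ltac to_Coquelicot :=
  repeat match goal with
  | |- context [Cmul ?a ?b] => change (Cmul a b) with (Cmult a b)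
  | |- context [Cadd ?a ?b] => change (Cadd a b) with (Cplus a b)
  | |- context [Csub ?a ?b] => change (Csub a b) with (Cminus a b)
  | |- context [Defs.Copp ?a] => change (Defs.Copp a) with (Complex.Copp a)
  | |- context [C1] => change C1 with (RtoC 1)
  | |- context [C0] => change C0 with (RtoC 0)
  | |- context [(?x, 0)] => change (x, 0) with (RtoC x)
  end.

Ltac cring := to_Coquelicot; rewrite ?RtoC_plus; apply C_eq_of_sub_0; ring.

Lemma Cnorm_Cmod a : Cnorm a = Cmod a.
Proof. unfold Cnorm, Cmod; f_equal; simpl; ring. Qed.

Lemma Cnorm_ge_0 a : 0 <= Cnorm a.
Proof. apply sqrt_pos. Qed.

Lemma Cnorm_mul a b : Cnorm (Cmul a b) = Cnorm a * Cnorm b.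
Proof. rewrite !Cnorm_Cmod. apply Cmod_mult. Qed.

Lemma Cnorm_triangle a b : Cnorm (Cadd a b) <= Cnorm a + Cnorm b.
Proof. rewrite !Cnorm_Cmod. apply Cmod_triangle. Qed.

Lemma Cnorm_opp a : Cnorm (Defs.Copp a) = Cnorm a.
Proof. rewrite !Cnorm_Cmod. apply Cmod_opp. Qed.

Lemma Cnorm_sub_le a b : Cnorm (Csub a b) <= Cnorm a + Cnorm b.
Proof. unfold Csub. rewrite <- (Cnorm_opp b). apply Cnorm_triangle. Qed.

Lemma Cnorm_add_ge a b : Cnorm a - Cnorm b <= Cnorm (Cadd a b).
Proof.
  pose proof (Cnorm_triangle (Cadd a b) (Defs.Copp b)) as H.
  replace (Cadd (Cadd a b) (Defs.Copp b)) with a in H by cring.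
  rewrite Cnorm_opp in H. lra.
Qed.

Lemma Cnorm_C0 : Cnorm C0 = 0.
Proof. rewrite Cnorm_Cmod. apply Cmod_0. Qed.

Lemma Cnorm_C1 : Cnorm C1 = 1.
Proof. rewrite Cnorm_Cmod. apply Cmod_1. Qed.

Lemma Cnorm_RtoC x : Cnorm (x, 0) = Rabs x.
Proof. rewrite Cnorm_Cmod. apply Cmod_R. Qed.

Lemma Cnorm_pow a n : Cnorm (Cpow a n) = Cnorm a ^ n.
Proof. induction n; simpl. apply Cnorm_C1. rewrite Cnorm_mul, IHn. ring. Qed.

Lemma Cnorm_1_sub_le a : Cnorm a = 1 -> Cnorm (Csub C1 a) <= 2.
Proof. intros H. eapply Rle_trans. apply Cnorm_sub_le. rewrite Cnorm_C1, H. lra. Qed.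

Lemma Cpow_add a n m : Cpow a (n + m) = Cmul (Cpow a n) (Cpow a m).
Proof. induction n; simpl. cring. rewrite IHn. cring. Qed.

Lemma Cpow_mul_l a b n : Cpow (Cmul a b) n = Cmul (Cpow a n) (Cpow b n).
Proof. induction n; simpl. cring. rewrite IHn. cring. Qed.

Lemma Cpow_mul a n m : Cpow a (n * m) = Cpow (Cpow a n) m.
Proof.
  induction m; simpl. now rewrite Nat.mul_0_r.
  rewrite Nat.mul_succ_r, Cpow_add, IHm. cring.
Qed.

Lemma Cpow_C1 n : Cpow C1 n = C1.
Proof. induction n; simpl; auto. rewrite IHn. cring. Qed.

Lemma Cnorm_1_sub_pow_le a N :
  Cnorm a = 1 -> Cnorm (Csub C1 (Cpow a N)) <= INR N * Cnorm (Csub C1 a).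
Proof.
  intros Ha. induction N.
  - simpl. replace (Csub C1 C1) with C0 by cring. rewrite Cnorm_C0. lra.
  - simpl Cpow. rewrite S_INR.
    replace (Csub C1 (Cmul a (Cpow a N)))
      with (Cadd (Csub C1 (Cpow a N)) (Cmul (Cpow a N) (Csub C1 a))) by cring.
    eapply Rle_trans. apply Cnorm_triangle.
    rewrite Cnorm_mul, Cnorm_pow, Ha, pow1. lra.
Qed.

Lemma C2norm_ge_0 p : 0 <= C2norm p.
Proof. apply sqrt_pos. Qed.

Lemma C2norm_ge_fst p : Cnorm (fst p) <= C2norm p.
Proof.
  unfold C2norm. rewrite <- (sqrt_square (Cnorm (fst p))) at 1 by apply Cnorm_ge_0.
  apply sqrt_le_1_alt. pose proof (Cnorm_ge_0 (snd p)). nra.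
Qed.

Lemma C2norm_ge_snd p : Cnorm (snd p) <= C2norm p.
Proof.
  unfold C2norm. rewrite <- (sqrt_square (Cnorm (snd p))) at 1 by apply Cnorm_ge_0.
  apply sqrt_le_1_alt. pose proof (Cnorm_ge_0 (fst p)). nra.
Qed.

Lemma C2norm_le p : C2norm p <= Cnorm (fst p) + Cnorm (snd p).
Proof.
  unfold C2norm. pose proof (Cnorm_ge_0 (fst p)). pose proof (Cnorm_ge_0 (snd p)).
  rewrite <- (sqrt_square (Cnorm (fst p) + Cnorm (snd p))) by lra.
  apply sqrt_le_1_alt. nra.
Qed.

Lemma C2norm_snd_C0 a : C2norm (a, C0) = Cnorm a.
Proof.
  unfold C2norm; simpl. rewrite Cnorm_C0, Rmult_0_r, Rplus_0_r.
  apply sqrt_square, Cnorm_ge_0.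
Qed.

Lemma pow_le_1 x n : 0 <= x <= 1 -> x ^ n <= 1.
Proof. intros Hx. rewrite <- (pow1 n). now apply pow_incr. Qed.

Lemma pow_le_pow_le_1 x n m : 0 <= x <= 1 -> (n <= m)%nat -> x ^ m <= x ^ n.
Proof.
  intros Hx H. replace m with (n + (m - n))%nat by lia. rewrite pow_add.
  pose proof (pow_le x n ltac:(lra)). pose proof (pow_le_1 x (m - n) Hx). nra.
Qed.

(** * The exponential [Ce t = e^{2 pi i t}] *)

Lemma Ce_add s t : Ce (s + t) = Cmul (Ce s) (Ce t).
Proof.
  unfold Ce, Cmul; simpl. replace (2 * PI * (s + t)) with (2 * PI * s + 2 * PI * t) by ring.
  rewrite cos_plus, sin_plus. f_equal; ring.
Qed.

Lemma Ce_0 : Ce 0 = C1.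
Proof. unfold Ce, C1. now rewrite Rmult_0_r, cos_0, sin_0. Qed.

Lemma Cnorm_Ce t : Cnorm (Ce t) = 1.
Proof.
  unfold Cnorm, Ce; simpl. rewrite <- sqrt_1. f_equal.
  pose proof (sin2_cos2 (2 * PI * t)). unfold Rsqr in H. lra.
Qed.

Lemma Ce_INR n : Ce (INR n) = C1.
Proof.
  induction n. apply Ce_0.
  rewrite S_INR, Ce_add, IHn. unfold Ce. rewrite Rmult_1_r, cos_2PI, sin_2PI. cring.
Qed.

Lemma Ce_IZR p : Ce (IZR p) = C1.
Proof.
  destruct (Z_le_gt_dec 0 p).
  - rewrite <- (Z2Nat.id p), <- INR_IZR_INZ by lia. apply Ce_INR.
  - assert (Hp : Ce (IZR (- p)) = C1).
    { rewrite <- (Z2Nat.id (- p)), <- INR_IZR_INZ by lia. apply Ce_INR. }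
    replace (Ce (IZR p)) with (Cmul (Ce (IZR p)) (Ce (IZR (- p)))) by (rewrite Hp; cring).
    rewrite <- Ce_add, opp_IZR, Rplus_opp_r. apply Ce_0.
Qed.

Lemma Cpow_Ce t n : Cpow (Ce t) n = Ce (INR n * t).
Proof.
  induction n; simpl Cpow. now rewrite Rmult_0_l, Ce_0.
  rewrite IHn, S_INR, <- Ce_add. f_equal. ring.
Qed.

Lemma Cnorm_1_sub_Ce_opp t : Cnorm (Csub C1 (Ce (- t))) = Cnorm (Csub C1 (Ce t)).
Proof.
  unfold Cnorm, Ce, Csub, Cadd, Defs.Copp, C1; simpl.
  replace (2 * PI * - t) with (- (2 * PI * t)) by ring.
  rewrite cos_neg, sin_neg. f_equal; ring.
Qed.

Lemma Cnorm_1_sub_Ce t : Cnorm (Csub C1 (Ce t)) = sqrt (2 - 2 * cos (2 * PI * t)).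
Proof.
  unfold Cnorm, Ce, Csub, Cadd, Defs.Copp, C1; simpl. f_equal.
  pose proof (sin2_cos2 (2 * PI * t)). unfold Rsqr in H. nra.
Qed.

Lemma Rabs_sin_le y : Rabs (sin y) <= Rabs y.
Proof.
  assert (Hpos : forall x, 0 < x -> Rabs (sin x) <= x).
  { intros x Hx. apply Rabs_le. pose proof (sin_lt_x x Hx).
    destruct (Rle_dec x PI).
    - pose proof (sin_ge_0 x ltac:(lra) r). lra.
    - pose proof (SIN_bound x). pose proof PI2_3_2. lra. }
  destruct (Rtotal_order y 0) as [Hl | [-> | Hg]].
  - rewrite (Rabs_left y) by lra. rewrite <- Rabs_Ropp, <- sin_neg. apply Hpos. lra.
  - rewrite sin_0, Rabs_R0. lra.
  - rewrite (Rabs_pos_eq y) by lra. auto.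
Qed.

(* |1 - e^{2 pi i t}| = 2 |sin (pi t)| *)
Lemma Cnorm_1_sub_Ce_le t : Cnorm (Csub C1 (Ce t)) <= 2 * PI * Rabs t.
Proof.
  rewrite Cnorm_1_sub_Ce. pose proof PI_RGT_0. pose proof (Rabs_pos t).
  replace (2 * PI * t) with (2 * (PI * t)) by ring. rewrite cos_2a_sin.
  pose proof (Rabs_sin_le (PI * t)) as Hs.
  rewrite Rabs_mult, (Rabs_pos_eq PI) in Hs by lra.
  rewrite <- (sqrt_square (2 * PI * Rabs t)) by nra.
  apply sqrt_le_1_alt.
  assert (E : sin (PI * t) * sin (PI * t) = Rabs (sin (PI * t)) * Rabs (sin (PI * t)))
    by (rewrite <- Rabs_mult; symmetry; apply Rabs_pos_eq; nra).
  pose proof (Rabs_pos (sin (PI * t))). nra.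
Qed.

Lemma Cnorm_1_sub_Ce_ge t : 1 / 6 <= Rabs t <= 1 / 3 -> 1 <= Cnorm (Csub C1 (Ce t)).
Proof.
  assert (Hpos : forall s, 1 / 6 <= s <= 1 / 3 -> 1 <= Cnorm (Csub C1 (Ce s))).
  { intros s Hs. rewrite Cnorm_1_sub_Ce, <- sqrt_1. apply sqrt_le_1_alt.
    pose proof PI_RGT_0.
    assert (Hcos : cos (2 * PI * s) <= cos (PI / 3)).
    { destruct (Req_dec (2 * PI * s) (PI / 3)) as [-> | Hne]. lra.
      left. apply cos_decreasing_1; nra. }
    rewrite cos_PI3 in Hcos. lra. }
  intros Ht. destruct (Rle_dec 0 t).
  - rewrite Rabs_pos_eq in Ht by lra. auto.
  - rewrite Rabs_left in Ht by lra. rewrite <- Cnorm_1_sub_Ce_opp. apply Hpos. lra.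
Qed.

(** * Complex series *)

Definition is_Cseries (a : nat -> CC) (l : CC) : Prop := @is_series C_AbsRing C_NormedModule a l.

(* Coquelicot's [Series] is for real series only, so the complex sum is
   chosen by [epsilon]; it is a junk value C0 for a divergent series. *)
Definition Cseries (a : nat -> CC) : CC := epsilon (inhabits C0) (is_Cseries a).

Lemma is_Cseries_unique a l1 l2 : is_Cseries a l1 -> is_Cseries a l2 -> l1 = l2.
Proof. intros H1 H2. exact (@filterlim_locally_unique _ _ C_NormedModule _ _ _ _ _ H1 H2). Qed.

Lemma Cseries_unique a l : is_Cseries a l -> Cseries a = l.
Proof.
  intros H. apply (is_Cseries_unique a); auto.
  unfold Cseries. apply epsilon_spec. now exists l.
Qed.

Lemma Cseries_correct a : ex_series (fun n => Cnorm (a n)) -> is_Cseries a (Cseries a).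
Proof.
  intros H.
  destruct (@ex_series_le C_AbsRing C_CompleteNormedModule a (fun n => Cnorm (a n)))
    with (2 := H) as [l Hl].
  { intros n. rewrite Cnorm_Cmod. apply Rle_refl. }
  now rewrite (Cseries_unique a l Hl).
Qed.

Lemma Csum_sum_n a n : Csum a (S n) = @sum_n C_AbelianMonoid a n.
Proof.
  induction n. rewrite sum_O. simpl. cring.
  rewrite sum_Sn, <- IHn. reflexivity.
Qed.

Lemma Cnorm_sum_n_le (a : nat -> CC) n :
  Cnorm (@sum_n C_AbelianMonoid a n) <= sum_n (fun k => Cnorm (a k)) n.
Proof.
  induction n. rewrite !sum_O. lra.
  rewrite !sum_Sn. eapply Rle_trans. apply Cnorm_triangle. apply Rplus_le_compat_r, IHn.
Qed.

Lemma is_Cseries_norm_le a l c :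
  is_Cseries a l -> ex_series c -> (forall n, Cnorm (a n) <= c n) -> Cnorm l <= Series c.
Proof.
  intros Ha Hc Hle.
  assert (Hnorm : is_lim_seq (fun n => Cnorm (@sum_n C_AbelianMonoid a n)) (Cnorm l)).
  { rewrite Cnorm_Cmod.
    eapply filterlim_comp. exact Ha.
    eapply filterlim_ext. 2: apply (@filterlim_norm C_AbsRing C_NormedModule).
    intros x. symmetry. apply Cnorm_Cmod. }
  assert (Hsum : is_lim_seq (sum_n c) (Series c)) by (apply Series_correct in Hc; exact Hc).
  refine (is_lim_seq_le _ _ _ _ _ Hnorm Hsum).
  intros n. eapply Rle_trans. apply Cnorm_sum_n_le. apply sum_n_m_le, Hle.
Qed.

Lemma Ccv_of_is_Cseries a l : is_Cseries a l -> Ccv (Csum a) l.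
Proof.
  intros H eps Heps.
  destruct (proj1 (@filterlim_locally_ball_norm C_AbsRing nat C_NormedModule _ _ _ l) H
    (mkposreal eps Heps)) as [N HN].
  exists (S N). intros [|n] Hn. lia.
  rewrite Csum_sum_n, Cnorm_Cmod. apply HN. lia.
Qed.

Lemma Ccv_scal s l c : Ccv s l -> Ccv (fun N => Cmul c (s N)) (Cmul c l).
Proof.
  intros H eps Heps. pose proof (Cnorm_ge_0 c).
  destruct (H (eps / (Cnorm c + 1))) as [N HN]. { apply Rdiv_lt_0_compat; lra. }
  exists N. intros n Hn. specialize (HN n Hn).
  replace (Csub (Cmul c (s n)) (Cmul c l)) with (Cmul c (Csub (s n) l)) by cring.
  rewrite Cnorm_mul. apply Rmult_lt_compat_l with (r := Cnorm c + 1) in HN; [|lra].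
  replace ((Cnorm c + 1) * (eps / (Cnorm c + 1))) with eps in HN by (field; lra).
  pose proof (Cnorm_ge_0 (Csub (s n) l)). nra.
Qed.

Lemma is_Cseries_plus a b la lb :
  is_Cseries a la -> is_Cseries b lb -> is_Cseries (fun n => Cadd (a n) (b n)) (Cadd la lb).
Proof. apply (@is_series_plus C_AbsRing C_NormedModule). Qed.

Lemma is_Cseries_scal c a l : is_Cseries a l -> is_Cseries (fun n => Cmul c (a n)) (Cmul c l).
Proof. apply (@is_series_scal C_AbsRing C_NormedModule). Qed.

Lemma is_Cseries_ext a b l : (forall n, a n = b n) -> is_Cseries a l -> is_Cseries b l.
Proof. apply (@is_series_ext C_AbsRing C_NormedModule). Qed.

Lemma is_Cseries_0 : is_Cseries (fun _ => C0) C0.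
Proof.
  assert (H0 : forall n, @sum_n C_AbelianMonoid (fun _ => C0) n = C0).
  { induction n. apply sum_O. rewrite sum_Sn, IHn. change (Cadd C0 C0 = C0). cring. }
  unfold is_Cseries, is_series. eapply filterlim_ext. intros n; symmetry; apply H0.
  apply filterlim_const.
Qed.

Lemma is_Cseries_tail a L j :
  is_Cseries a L -> is_Cseries (fun k => a (S j + k)%nat) (Csub L (@sum_n C_AbelianMonoid a j)).
Proof.
  intros H. apply (@is_series_incr_n C_AbsRing C_NormedModule a (S j)). lia.
  simpl pred. match goal with |- is_series _ ?x => replace x with L end. exact H.
  change (L = Cadd (Csub L (@sum_n C_AbelianMonoid a j)) (@sum_n C_AbelianMonoid a j)). cring.
Qed.

Lemma Series_half_pow_tail j : Series (fun k => (1 / 2) ^ (S j + k)) = (1 / 2) ^ j.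
Proof.
  apply is_series_unique.
  replace ((1 / 2) ^ j) with ((1 / 2) ^ S j * / (1 - 1 / 2)) by (simpl; field).
  apply (is_series_ext (fun n => scal ((1 / 2) ^ S j) ((1 / 2) ^ n))).
  { intros n. now rewrite pow_add. }
  apply (@is_series_scal_l R_AbsRing R_NormedModule). apply is_series_geom.
  rewrite Rabs_pos_eq; lra.
Qed.

Lemma is_Cseries_tail_le a L j T : is_Cseries a L -> 0 <= T ->
  (forall k, Cnorm (a (S j + k)%nat) <= T * (1 / 2) ^ (S j + k)) ->
  Cnorm (Csub L (@sum_n C_AbelianMonoid a j)) <= T * (1 / 2) ^ j.
Proof.
  intros HL HT Hb. rewrite <- Series_half_pow_tail, <- Series_scal_l.
  apply (is_Cseries_norm_le _ _ _ (is_Cseries_tail a L j HL)); auto.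
  apply (@ex_series_scal_l R_AbsRing R_NormedModule).
  apply (ex_series_ext (fun n => scal ((1 / 2) ^ S j) ((1 / 2) ^ n))).
  { intros n. now rewrite pow_add. }
  apply (@ex_series_scal_l R_AbsRing R_NormedModule). apply ex_series_geom.
  rewrite Rabs_pos_eq; lra.
Qed.

Lemma Cnorm_sum_n_le_const (a : nat -> CC) i H : (forall n, (n <= i)%nat -> Cnorm (a n) <= H) ->
  Cnorm (@sum_n C_AbelianMonoid a i) <= INR (S i) * H.
Proof.
  intros Ha. eapply Rle_trans. apply Cnorm_sum_n_le.
  induction i.
  - rewrite sum_O. simpl. specialize (Ha 0%nat (le_n _)). lra.
  - rewrite sum_Sn, (S_INR (S i)). change (plus ?x ?y) with (x + y).
    pose proof (IHi (fun n Hn => Ha n ltac:(lia))). specialize (Ha (S i) (le_n _)). lra.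
Qed.

Lemma is_Cseries_split_le a L j H T : is_Cseries a L -> 0 <= T ->
  (forall n, (n <= j)%nat -> Cnorm (a n) <= H) ->
  (forall k, Cnorm (a (S j + k)%nat) <= T * (1 / 2) ^ (S j + k)) ->
  Cnorm L <= INR (S j) * H + T * (1 / 2) ^ j.
Proof.
  intros HL HT Hh Hb. pose proof (is_Cseries_tail_le a L j T HL HT Hb).
  pose proof (Cnorm_sum_n_le_const a j H Hh).
  replace L with (Cadd (@sum_n C_AbelianMonoid a j) (Csub L (@sum_n C_AbelianMonoid a j))) by cring.
  eapply Rle_trans. apply Cnorm_triangle. lra.
Qed.

Lemma is_Cseries_dominant_ge a L i H T : is_Cseries a L -> 0 <= T ->
  (forall n, (n <= i)%nat -> Cnorm (a n) <= H) ->
  (forall k, Cnorm (a (S (S i) + k)%nat) <= T * (1 / 2) ^ (S (S i) + k)) ->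
  Cnorm (a (S i)) - INR (S i) * H - T <= Cnorm L.
Proof.
  intros HL HT Hh Hb. pose proof (is_Cseries_tail_le a L (S i) T HL HT Hb) as Htail.
  pose proof (Cnorm_sum_n_le_const a i H Hh) as Hhead.
  rewrite sum_Sn in Htail. change (plus ?x ?y) with (Cadd x y) in Htail.
  set (s := @sum_n C_AbelianMonoid a i) in *.
  pose proof (Cnorm_triangle L (Cadd (Defs.Copp s) (Defs.Copp (Csub L (Cadd s (a (S i))))))) as H1.
  pose proof (Cnorm_triangle (Defs.Copp s) (Defs.Copp (Csub L (Cadd s (a (S i)))))) as H2.
  rewrite !Cnorm_opp in H2.
  replace (Cadd L (Cadd (Defs.Copp s) (Defs.Copp (Csub L (Cadd s (a (S i))))))) with (a (S i)) in H1
    by cring.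
  pose proof (pow_le_1 (1 / 2) (S i) ltac:(lra)). nra.
Qed.

(** * Skew products over a rotation *)

Definition skew_jacobian (a d : CC) : Mat2 := ((a, Cmul a d), (C0, a)).

Lemma Mat2_norm_skew_jacobian a d : Cnorm (Cmul a d) <= Mat2_norm (skew_jacobian a d).
Proof.
  unfold Mat2_norm, skew_jacobian; simpl.
  rewrite <- (sqrt_pow2 (Cnorm (Cmul a d))) at 1 by apply Cnorm_ge_0.
  apply sqrt_le_1_alt. pose proof (pow2_ge_0 (Cnorm a)). pose proof (pow2_ge_0 (Cnorm C0)). lra.
Qed.

Lemma skew_has_cderiv a f d w z rho K :
  0 < rho -> 0 <= K ->
  (forall k, Cnorm k < rho ->
     Cnorm (Csub (Csub (f (Cadd z k)) (f z)) (Cmul d k)) <= K * (Cnorm k * Cnorm k)) ->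
  has_cderiv (fun p => (Cmul a (Cadd (fst p) (f (snd p))), Cmul a (snd p))) (w, z)
    (skew_jacobian a d).
Proof.
  intros Hrho HK Hrem eps Heps. pose proof (Cnorm_ge_0 a) as Ha.
  set (c := eps / ((Cnorm a + 1) * (K + 1))).
  assert (Hc : 0 < c) by (apply Rdiv_lt_0_compat; nra).
  assert (Hac : Cnorm a * K * c <= eps).
  { unfold c. apply Rmult_le_reg_r with ((Cnorm a + 1) * (K + 1)). nra.
    replace (Cnorm a * K * (eps / ((Cnorm a + 1) * (K + 1))) * ((Cnorm a + 1) * (K + 1)))
      with (Cnorm a * K * eps) by (field; lra).
    nra. }
  exists (Rmin rho c). split. now apply Rmin_glb_lt.
  intros [h k] [_ Hh]. simpl.
  pose proof (C2norm_ge_snd (h, k)) as Hk. simpl in Hk. pose proof (Cnorm_ge_0 k).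
  pose proof (Rmin_l rho c). pose proof (Rmin_r rho c).
  replace (C2sub _ _) with (Cmul a (Csub (Csub (f (Cadd z k)) (f z)) (Cmul d k)), C0)
    by (unfold C2sub, C2add, Mat2_apply, skew_jacobian; simpl; f_equal; cring).
  rewrite C2norm_snd_C0, Cnorm_mul.
  specialize (Hrem k ltac:(lra)).
  apply Rle_trans with (Cnorm a * (K * (c * C2norm (h, k)))).
  - apply Rmult_le_compat_l; auto. eapply Rle_trans. exact Hrem.
    apply Rmult_le_compat_l; auto. apply Rmult_le_compat; lra.
  - pose proof (C2norm_ge_0 (h, k)).
    replace (Cnorm a * (K * (c * C2norm (h, k)))) with (Cnorm a * K * c * C2norm (h, k)) by ring.
    apply Rmult_le_compat_r; auto.
Qed.

(** * Lacunary power series *)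

Definition pow_remainder (z k : CC) (j : nat) : CC :=
  Csub (Csub (Cpow (Cadd z k) (S j)) (Cpow z (S j))) (Cmul (INR (S j), 0) (Cmul (Cpow z j) k)).

Lemma pow_remainder_S z k j :
  pow_remainder z k (S j) =
  Cadd (Cmul (Cadd z k) (pow_remainder z k j)) (Cmul (INR (S j), 0) (Cmul (Cpow z j) (Cmul k k))).
Proof.
  unfold pow_remainder. rewrite !S_INR. simpl Cpow.
  cring.
Qed.

Lemma pow_remainder_le z k r j : Cnorm z <= r -> Cnorm (Cadd z k) <= r ->
  r * Cnorm (pow_remainder z k j) <= INR j ^ 2 * r ^ j * (Cnorm k * Cnorm k).
Proof.
  intros Hz Hzk. pose proof (Cnorm_ge_0 z). pose proof (Cnorm_ge_0 k).
  pose proof (Cnorm_ge_0 (Cadd z k)).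
  induction j.
  - unfold pow_remainder. simpl.
    replace (Csub (Csub (Cmul (Cadd z k) C1) (Cmul z C1)) (Cmul (1, 0) (Cmul C1 k))) with C0 by cring.
    rewrite Cnorm_C0. lra.
  - rewrite pow_remainder_S. pose proof (Cnorm_triangle
      (Cmul (Cadd z k) (pow_remainder z k j)) (Cmul (INR (S j), 0) (Cmul (Cpow z j) (Cmul k k)))) as Ht.
    rewrite !Cnorm_mul, Cnorm_RtoC, Cnorm_pow, Rabs_pos_eq in Ht by apply pos_INR.
    rewrite S_INR in *. pose proof (pos_INR j). pose proof (Cnorm_ge_0 (pow_remainder z k j)).
    pose proof (pow_incr _ _ j (conj (Cnorm_ge_0 z) Hz)). pose proof (pow_le r j ltac:(lra)).
    set (R := Cnorm (pow_remainder z k j)) in *. set (k2 := Cnorm k * Cnorm k) in *.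
    assert (Hk2 : 0 <= k2) by (unfold k2; nra).
    apply Rle_trans with (r * (r * R) + r * ((INR j + 1) * (r ^ j * k2))).
    + rewrite <- Rmult_plus_distr_l. apply Rmult_le_compat_l. lra.
      eapply Rle_trans. exact Ht. apply Rplus_le_compat.
      * apply Rmult_le_compat_r; lra.
      * apply Rmult_le_compat_l. lra. apply Rmult_le_compat_r; lra.
    + assert (r * (r * R) <= r * (INR j ^ 2 * r ^ j * k2)) by (apply Rmult_le_compat_l; lra).
      assert (0 <= r * r ^ j * k2) by (apply Rmult_le_pos; [apply Rmult_le_pos|]; lra).
      simpl pow in *. nra.
Qed.

Section Lacunary.

Variable Q : nat -> nat.

Definition lac_term (b : nat -> CC) (z : CC) (n : nat) : CC := Cmul (b n) (Cpow z (S (Q n))).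
Definition lac_sum (b : nat -> CC) (z : CC) : CC := Cseries (lac_term b z).

Definition lac_dterm (b : nat -> CC) (z : CC) (n : nat) : CC :=
  Cmul (Cmul (b n) (INR (S (Q n)), 0)) (Cpow z (Q n)).
Definition lac_deriv (b : nat -> CC) (z : CC) : CC := Cseries (lac_dterm b z).

(* The weight (Q n + 1)^2 lets one majorant control, on the disc of radius r,
   the series, its derivative and its second-order Taylor remainder. *)
Definition lac_majorant (b : nat -> CC) (r : R) (n : nat) : R :=
  Cnorm (b n) * (INR (Q n) + 1) ^ 2 * r ^ Q n.
Definition lac_summable (b : nat -> CC) (r : R) : Prop := ex_series (lac_majorant b r).

Lemma lac_majorant_ge_0 b r n : 0 <= r -> 0 <= lac_majorant b r n.
Proof.
  intros Hr. unfold lac_majorant. pose proof (Cnorm_ge_0 (b n)).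
  pose proof (pow2_ge_0 (INR (Q n) + 1)). pose proof (pow_le r (Q n) Hr).
  apply Rmult_le_pos; auto. now apply Rmult_le_pos.
Qed.

Lemma Series_lac_majorant_ge_0 b r : 0 <= r -> lac_summable b r -> 0 <= Series (lac_majorant b r).
Proof.
  intros Hr Hs. apply Rle_trans with (Series (fun n => 0 * lac_majorant b r n)).
  { rewrite Series_scal_l. lra. }
  apply Series_le; auto. intros n. pose proof (lac_majorant_ge_0 b r n Hr). lra.
Qed.

Lemma lac_term_le b r z n : 0 <= r -> Cnorm z <= r ->
  Cnorm (lac_term b z n) <= r * lac_majorant b r n.
Proof.
  intros Hr Hz. unfold lac_term, lac_majorant. rewrite Cnorm_mul, Cnorm_pow.
  pose proof (Cnorm_ge_0 (b n)). pose proof (pos_INR (Q n)).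
  pose proof (pow_incr (Cnorm z) r (S (Q n)) (conj (Cnorm_ge_0 z) Hz)).
  pose proof (pow_le r (S (Q n)) Hr). simpl pow in *.
  assert (Cnorm (b n) * (Cnorm z * Cnorm z ^ Q n) <= Cnorm (b n) * (r * r ^ Q n))
    by (apply Rmult_le_compat_l; auto).
  assert (0 <= Cnorm (b n) * (r * r ^ Q n)) by (apply Rmult_le_pos; auto).
  nra.
Qed.

Lemma lac_dterm_le b r z n : 0 <= r -> Cnorm z <= r ->
  Cnorm (lac_dterm b z n) <= lac_majorant b r n.
Proof.
  intros Hr Hz. unfold lac_dterm, lac_majorant.
  rewrite !Cnorm_mul, Cnorm_pow, Cnorm_RtoC, Rabs_pos_eq, S_INR by apply pos_INR.
  pose proof (Cnorm_ge_0 (b n)). pose proof (pos_INR (Q n)).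
  pose proof (pow_incr (Cnorm z) r (Q n) (conj (Cnorm_ge_0 z) Hz)).
  pose proof (pow_le (Cnorm z) (Q n) (Cnorm_ge_0 z)).
  set (c := Cnorm (b n) * (INR (Q n) + 1)).
  assert (Hc : 0 <= c) by (unfold c; nra).
  apply Rle_trans with (c * r ^ Q n). { apply Rmult_le_compat_l; auto. }
  replace (Cnorm (b n) * (INR (Q n) + 1) ^ 2 * r ^ Q n) with (c * r ^ Q n * (INR (Q n) + 1))
    by (unfold c; ring).
  pose proof (pow_le r (Q n) Hr).
  rewrite <- (Rmult_1_r (c * r ^ Q n)) at 1. apply Rmult_le_compat_l; nra.
Qed.

Lemma is_Cseries_lac_sum b r z : 0 <= r -> Cnorm z <= r -> lac_summable b r ->
  is_Cseries (lac_term b z) (lac_sum b z).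
Proof.
  intros Hr Hz Hs. apply Cseries_correct.
  apply (@ex_series_le R_AbsRing R_CompleteNormedModule _ (fun n => r * lac_majorant b r n)).
  - intros n. change (norm ?x) with (Rabs x). rewrite Rabs_pos_eq by apply Cnorm_ge_0.
    now apply lac_term_le.
  - now apply (@ex_series_scal_l R_AbsRing R_NormedModule).
Qed.

Lemma is_Cseries_lac_deriv b r z : 0 <= r -> Cnorm z <= r -> lac_summable b r ->
  is_Cseries (lac_dterm b z) (lac_deriv b z).
Proof.
  intros Hr Hz Hs. apply Cseries_correct.
  apply (@ex_series_le R_AbsRing R_CompleteNormedModule _ (lac_majorant b r)); auto.
  intros n. change (norm ?x) with (Rabs x). rewrite Rabs_pos_eq by apply Cnorm_ge_0.
  now apply lac_dterm_le.
Qed.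

Lemma lac_sum_remainder_le b r z k : 0 < r -> Cnorm z <= r -> Cnorm (Cadd z k) <= r ->
  lac_summable b r ->
  Cnorm (Csub (Csub (lac_sum b (Cadd z k)) (lac_sum b z)) (Cmul (lac_deriv b z) k))
    <= Series (lac_majorant b r) / r * (Cnorm k * Cnorm k).
Proof.
  intros Hr Hz Hzk Hs.
  pose proof (is_Cseries_lac_sum b r (Cadd z k) ltac:(lra) Hzk Hs) as H1.
  pose proof (is_Cseries_lac_sum b r z ltac:(lra) Hz Hs) as H0.
  pose proof (is_Cseries_lac_deriv b r z ltac:(lra) Hz Hs) as HD.
  pose proof (is_Cseries_plus _ _ _ _ (is_Cseries_plus _ _ _ _ H1 (is_Cseries_scal (-1, 0) _ _ H0))
    (is_Cseries_scal (-1, 0) _ _ (is_Cseries_scal k _ _ HD))) as H.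
  replace (Csub (Csub (lac_sum b (Cadd z k)) (lac_sum b z)) (Cmul (lac_deriv b z) k)) with
    (Cadd (Cadd (lac_sum b (Cadd z k)) (Cmul (-1, 0) (lac_sum b z)))
      (Cmul (-1, 0) (Cmul k (lac_deriv b z)))) by cring.
  replace (Series (lac_majorant b r) / r * (Cnorm k * Cnorm k))
    with (Series (fun n => lac_majorant b r n / r * (Cnorm k * Cnorm k)))
    by (rewrite Series_scal_r; unfold Rdiv; rewrite Series_scal_r; ring).
  apply (is_Cseries_norm_le _ _ _ H).
  { apply ex_series_scal_r. unfold Rdiv. now apply ex_series_scal_r. }
  intros n. cbv beta.
  replace (Cadd (Cadd (lac_term b (Cadd z k) n) (Cmul (-1, 0) (lac_term b z n)))
      (Cmul (-1, 0) (Cmul k (lac_dterm b z n)))) with (Cmul (b n) (pow_remainder z k (Q n)))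
    by (unfold lac_term, lac_dterm, pow_remainder; cring).
  rewrite Cnorm_mul. pose proof (pow_remainder_le z k r (Q n) Hz Hzk).
  pose proof (Cnorm_ge_0 (b n)). pose proof (Cnorm_ge_0 k). pose proof (pos_INR (Q n)).
  pose proof (pow_le r (Q n) ltac:(lra)).
  apply Rmult_le_reg_l with r; auto.
  replace (r * (lac_majorant b r n / r * (Cnorm k * Cnorm k)))
    with (lac_majorant b r n * (Cnorm k * Cnorm k)) by (field; lra).
  unfold lac_majorant.
  assert (INR (Q n) ^ 2 * r ^ Q n * (Cnorm k * Cnorm k)
          <= (INR (Q n) + 1) ^ 2 * r ^ Q n * (Cnorm k * Cnorm k)).
  { apply Rmult_le_compat_r. nra. apply Rmult_le_compat_r; auto. apply pow_incr. lra. }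
  assert (0 <= Cnorm (b n)) by auto.
  nra.
Qed.

Lemma lac_sum_ext b b' z z' :
  (forall n, lac_term b z n = lac_term b' z' n) -> lac_sum b z = lac_sum b' z'.
Proof. intros H. unfold lac_sum. f_equal. now apply functional_extensionality. Qed.

Lemma lac_sum_0 b z : (forall n, b n = C0) -> lac_sum b z = C0.
Proof.
  intros H. apply Cseries_unique. eapply is_Cseries_ext. 2: apply is_Cseries_0.
  intros n. unfold lac_term. rewrite H. cring.
Qed.

Lemma lac_sum_lincomb b b1 b2 c1 c2 r z : 0 <= r -> Cnorm z <= r ->
  lac_summable b1 r -> lac_summable b2 r ->
  (forall n, b n = Cadd (Cmul c1 (b1 n)) (Cmul c2 (b2 n))) ->
  lac_sum b z = Cadd (Cmul c1 (lac_sum b1 z)) (Cmul c2 (lac_sum b2 z)).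
Proof.
  intros Hr Hz H1 H2 Hb. apply Cseries_unique.
  eapply is_Cseries_ext.
  2: apply (is_Cseries_plus _ _ _ _ (is_Cseries_scal c1 _ _ (is_Cseries_lac_sum b1 r z Hr Hz H1))
              (is_Cseries_scal c2 _ _ (is_Cseries_lac_sum b2 r z Hr Hz H2))).
  intros n. unfold lac_term. rewrite Hb. cring.
Qed.

Lemma lac_sum_scal b c r z : 0 <= r -> Cnorm z <= r -> lac_summable b r ->
  lac_sum (fun n => Cmul c (b n)) z = Cmul c (lac_sum b z).
Proof.
  intros Hr Hz Hs. rewrite (lac_sum_lincomb _ b b c C0 r z); auto. cring.
  intros n. cring.
Qed.

Lemma lac_sum_rotate b g z :
  lac_sum b (Cmul g z) = lac_sum (fun n => Cmul (b n) (Cpow g (S (Q n)))) z.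
Proof. apply lac_sum_ext. intros n. unfold lac_term. rewrite Cpow_mul_l. cring. Qed.

Lemma lac_summable_le b b' r : 0 <= r -> (forall n, Cnorm (b n) <= Cnorm (b' n)) ->
  lac_summable b' r -> lac_summable b r.
Proof.
  intros Hr Hb Hs. apply (@ex_series_le R_AbsRing R_CompleteNormedModule _ _) with (2 := Hs).
  intros n. change (norm ?x) with (Rabs x). rewrite Rabs_pos_eq by now apply lac_majorant_ge_0.
  unfold lac_majorant. apply Rmult_le_compat_r. now apply pow_le.
  apply Rmult_le_compat_r; auto. apply pow2_ge_0.
Qed.

Lemma lac_summable_rotate b g r : 0 <= r -> Cnorm g = 1 -> lac_summable b r ->
  lac_summable (fun n => Cmul (b n) (Cpow g (S (Q n)))) r.
Proof.
  intros Hr Hg. apply lac_summable_le; auto.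
  intros n. rewrite Cnorm_mul, Cnorm_pow, Hg, pow1. lra.
Qed.

Lemma lac_summable_mono b r r' : 0 <= r' <= r -> lac_summable b r -> lac_summable b r'.
Proof.
  intros Hr Hs. apply (@ex_series_le R_AbsRing R_CompleteNormedModule _ _) with (2 := Hs).
  intros n. change (norm ?x) with (Rabs x). rewrite Rabs_pos_eq by (apply lac_majorant_ge_0; lra).
  unfold lac_majorant. apply Rmult_le_compat_l.
  - pose proof (Cnorm_ge_0 (b n)). pose proof (pow2_ge_0 (INR (Q n) + 1)). nra.
  - now apply pow_incr.
Qed.

(* (m + 1) rho^m <= C, with (1 + t)^m >= 1 + m t for rho = 1 / (1 + t). *)
Lemma lin_mul_geom_bounded rho : 0 < rho < 1 -> exists C, forall m, (INR m + 1) * rho ^ m <= C.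
Proof.
  intros Hr. set (t := / rho - 1).
  assert (Ht : 0 < t).
  { assert (1 < / rho) by (rewrite <- Rinv_1; apply Rinv_lt_contravar; lra). unfold t. lra. }
  exists (1 + / t). intros m. pose proof (Rle_pow_lin t m ltac:(lra)) as Hb.
  assert (E : (1 + t) ^ m * rho ^ m = 1).
  { rewrite <- Rpow_mult_distr. unfold t. replace ((1 + (/ rho - 1)) * rho) with 1 by (field; lra).
    apply pow1. }
  pose proof (pos_INR m). pose proof (pow_lt rho m ltac:(lra)).
  assert (Hit : 0 < / t) by (apply Rinv_0_lt_compat; lra).
  assert (INR m + 1 <= (1 + t) ^ m * (1 + / t)).
  { apply Rle_trans with ((1 + INR m * t) * (1 + / t)).
    - replace ((1 + INR m * t) * (1 + / t)) with (1 + / t + INR m * t + INR m) by (field; lra). nra.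
    - apply Rmult_le_compat_r; lra. }
  apply Rle_trans with ((1 + t) ^ m * (1 + / t) * rho ^ m).
  - apply Rmult_le_compat_r; lra.
  - replace ((1 + t) ^ m * (1 + / t) * rho ^ m) with ((1 + t) ^ m * rho ^ m * (1 + / t)) by ring.
    rewrite E. lra.
Qed.

(* (Q n + 1)^2 r^(Q n) <= C^2 s^n with s = sqrt r and C bounding (m + 1) r^(m/4);
   r is first raised to at least 1/2 to keep s > 0. *)
Lemma lac_summable_unit_disc b K : (forall n, (n <= Q n)%nat) ->
  (forall n, Cnorm (b n) <= K) -> forall r, 0 <= r < 1 -> lac_summable b r.
Proof.
  intros HQ Hb r Hr.
  assert (HK : 0 <= K) by (pose proof (Hb 0%nat); pose proof (Cnorm_ge_0 (b 0%nat)); lra).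
  set (r' := Rmax r (1 / 2)).
  assert (Hr' : 1 / 2 <= r' < 1) by (split; [apply Rmax_r | apply Rmax_lub_lt; lra]).
  apply lac_summable_mono with r'. split. lra. apply Rmax_l.
  set (s := sqrt r'). set (rho := sqrt s).
  assert (Hs : 0 < s < 1) by (split; [apply sqrt_lt_R0 | rewrite <- sqrt_1; apply sqrt_lt_1_alt]; lra).
  assert (Hrho : 0 < rho < 1)
    by (split; [apply sqrt_lt_R0 | rewrite <- sqrt_1; apply sqrt_lt_1_alt]; lra).
  assert (Es : rho * rho = s) by (apply sqrt_sqrt; lra).
  assert (Er : s * s = r') by (apply sqrt_sqrt; lra).
  destruct (lin_mul_geom_bounded rho Hrho) as [C HC].
  apply (@ex_series_le R_AbsRing R_CompleteNormedModule _ (fun n => K * C ^ 2 * s ^ n)).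
  - intros n. change (norm ?x) with (Rabs x). rewrite Rabs_pos_eq by (apply lac_majorant_ge_0; lra).
    unfold lac_majorant. specialize (HC (Q n)). pose proof (pow_lt rho (Q n) ltac:(lra)).
    pose proof (pos_INR (Q n)). pose proof (Cnorm_ge_0 (b n)).
    assert (E : (INR (Q n) + 1) ^ 2 * r' ^ Q n = ((INR (Q n) + 1) * rho ^ Q n) ^ 2 * s ^ Q n).
    { rewrite <- Er, <- Es, !Rpow_mult_distr. ring. }
    assert (((INR (Q n) + 1) * rho ^ Q n) ^ 2 <= C ^ 2) by (apply pow_incr; nra).
    assert (s ^ Q n <= s ^ n) by (apply pow_le_pow_le_1; auto; lra).
    pose proof (pow_lt s (Q n) ltac:(lra)).
    rewrite Rmult_assoc, E, Rmult_assoc. apply Rmult_le_compat; auto.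
    + apply Rmult_le_pos. apply pow2_ge_0. lra.
    + apply Rmult_le_compat; auto. apply pow2_ge_0. lra.
  - apply (@ex_series_scal_l R_AbsRing R_NormedModule). apply ex_series_geom.
    rewrite Rabs_pos_eq; lra.
Qed.

End Lacunary.

Definition skew (Q : nat -> nat) (a : CC) (b : nat -> CC) (p : C2) : C2 :=
  (Cmul a (Cadd (fst p) (lac_sum Q b (snd p))), Cmul a (snd p)).

Lemma skew_cderiv Q a b r w z : Cnorm z < r -> lac_summable Q b r ->
  has_cderiv (skew Q a b) (w, z) (skew_jacobian a (lac_deriv Q b z)).
Proof.
  intros Hz Hs. pose proof (Cnorm_ge_0 z).
  apply (skew_has_cderiv a (lac_sum Q b) _ w z (r - Cnorm z) (Series (lac_majorant Q b r) / r)).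
  - lra.
  - apply Rdiv_le_0_compat. apply Series_lac_majorant_ge_0; auto; lra. lra.
  - intros k Hk. apply lac_sum_remainder_le; auto; try lra.
    eapply Rle_trans. apply Cnorm_triangle. lra.
Qed.

Lemma skew_holomorphic Q a b : (forall r, 0 <= r -> lac_summable Q b r) ->
  holomorphic_on (fun _ => True) (skew Q a b).
Proof.
  intros Hs [w z] _. exists (skew_jacobian a (lac_deriv Q b z)).
  apply skew_cderiv with (Cnorm z + 1). lra. apply Hs. pose proof (Cnorm_ge_0 z). lra.
Qed.

Lemma skew_holomorphic_disc Q a b : (forall r, 0 <= r < 1 -> lac_summable Q b r) ->
  holomorphic_on CxDisk (skew Q a b).
Proof.
  intros Hs [w z] Hz. unfold CxDisk in Hz; simpl in Hz.
  exists (skew_jacobian a (lac_deriv Q b z)).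
  apply skew_cderiv with ((Cnorm z + 1) / 2). lra. apply Hs. pose proof (Cnorm_ge_0 z). lra.
Qed.

(** * Continued fractions *)

(* (p_n, p_{n-1}), with p_{-1} = 1 *)
Fixpoint cf_ppair (theta : R) (n : nat) : (Z * Z)%type :=
  match n with
  | O => (cf_a theta 0, 1%Z)
  | S m => let '(p, p') := cf_ppair theta m in ((cf_a theta (S m) * p + p')%Z, p)
  end.

Definition cf_p theta n := fst (cf_ppair theta n).
Definition cf_pprev theta n := snd (cf_ppair theta n).
Definition cf_qprev theta n := snd (cf_qpair theta n).

Lemma cf_q_S th k : cf_q th (S k) = (cf_a th (S k) * cf_q th k + cf_qprev th k)%Z.
Proof. unfold cf_q, cf_qprev; simpl. now destruct (cf_qpair th k). Qed.

Lemma cf_qprev_S th k : cf_qprev th (S k) = cf_q th k.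
Proof. unfold cf_q, cf_qprev; simpl. now destruct (cf_qpair th k). Qed.

Lemma cf_p_S th k : cf_p th (S k) = (cf_a th (S k) * cf_p th k + cf_pprev th k)%Z.
Proof. unfold cf_p, cf_pprev; simpl. now destruct (cf_ppair th k). Qed.

Lemma cf_pprev_S th k : cf_pprev th (S k) = cf_p th k.
Proof. unfold cf_p, cf_pprev; simpl. now destruct (cf_ppair th k). Qed.

Lemma floorZ_spec r : IZR (floorZ r) <= r < IZR (floorZ r) + 1.
Proof. unfold floorZ. pose proof (base_Int_part r). lra. Qed.

Lemma cf_rem_bounds th k : 0 <= cf_rem th k < 1.
Proof.
  destruct k; simpl; [pose proof (floorZ_spec th) | pose proof (floorZ_spec (/ cf_rem th k))]; lra.
Qed.

Definition cf_delta th k := IZR (cf_q th k) * th - IZR (cf_p th k).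
Definition cf_delta_prev th k := IZR (cf_qprev th k) * th - IZR (cf_pprev th k).

(* delta_k = - x_k delta_{k-1} and q_k p_{k-1} - q_{k-1} p_k = +-1,
   the latter in the form (q_k delta_{k-1} - q_{k-1} delta_k)^2 = 1. *)
Definition cf_invariant th k :=
  (1 <= cf_q th k)%Z /\ (0 <= cf_qprev th k)%Z /\ (cf_qprev th k <= cf_q th k)%Z /\
  (Z.of_nat k <= cf_q th k)%Z /\ ((1 <= k)%nat -> (1 <= cf_qprev th k)%Z) /\
  cf_delta th k = - cf_rem th k * cf_delta_prev th k /\
  (IZR (cf_q th k) * cf_delta_prev th k - IZR (cf_qprev th k) * cf_delta th k) ^ 2 = 1.

Lemma cf_rem_neq_0 th k : irrational th -> cf_invariant th k -> cf_rem th k <> 0.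
Proof.
  intros Hi [Hq [_ [_ [_ [_ [Hd _]]]]]] H0. rewrite H0 in Hd. unfold cf_delta in Hd.
  apply (Hi (cf_p th k) (cf_q th k)). lia.
  assert (IZR (cf_q th k) <> 0) by (apply not_0_IZR; lia).
  field_simplify_eq; auto. lra.
Qed.

Lemma cf_a_S_ge_1 th k : irrational th -> cf_invariant th k -> (1 <= cf_a th (S k))%Z.
Proof.
  intros Hi Hk. pose proof (cf_rem_neq_0 th k Hi Hk). pose proof (cf_rem_bounds th k).
  simpl. pose proof (floorZ_spec (/ cf_rem th k)).
  assert (1 < / cf_rem th k) by (rewrite <- Rinv_1; apply Rinv_lt_contravar; lra).
  assert (Hp : 0 < IZR (floorZ (/ cf_rem th k))) by lra. apply lt_0_IZR in Hp. lia.
Qed.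

Lemma cf_invariant_all th : irrational th -> forall k, cf_invariant th k.
Proof.
  intros Hi. induction k.
  - unfold cf_invariant, cf_delta, cf_delta_prev, cf_q, cf_qprev, cf_p, cf_pprev; simpl.
    repeat split; try lia; simpl; ring.
  - pose proof (cf_rem_neq_0 th k Hi IHk) as Hnz. pose proof (cf_a_S_ge_1 th k Hi IHk) as Ha.
    destruct IHk as [H1 [H2 [H3 [H4 [H5 [H6 H7]]]]]].
    unfold cf_invariant. rewrite cf_q_S, cf_qprev_S. repeat split; try lia.
    + nia.
    + rewrite Nat2Z.inj_succ. destruct k. nia. specialize (H5 ltac:(lia)). nia.
    + unfold cf_delta, cf_delta_prev in *. rewrite cf_q_S, cf_qprev_S, cf_p_S, cf_pprev_S.
      change (cf_rem th (S k)) with (/ cf_rem th k - IZR (cf_a th (S k))).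
      rewrite !plus_IZR, !mult_IZR.
      assert (E : IZR (cf_qprev th k) * th - IZR (cf_pprev th k)
                  = - (IZR (cf_q th k) * th - IZR (cf_p th k)) / cf_rem th k)
        by (rewrite H6; field; auto).
      transitivity (IZR (cf_a th (S k)) * (IZR (cf_q th k) * th - IZR (cf_p th k))
                    + (IZR (cf_qprev th k) * th - IZR (cf_pprev th k))). ring.
      rewrite E. field. auto.
    + unfold cf_delta, cf_delta_prev in *.
      rewrite cf_qprev_S, cf_p_S, cf_pprev_S, cf_q_S, !plus_IZR, !mult_IZR.
      rewrite <- H7. ring.
Qed.

Lemma cf_q_ge_1 th k : irrational th -> (1 <= cf_q th k)%Z.
Proof. intros Hi. apply (cf_invariant_all th Hi k). Qed.

Lemma cf_q_ge_index th k : irrational th -> (Z.of_nat k <= cf_q th k)%Z.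
Proof. intros Hi. apply (cf_invariant_all th Hi k). Qed.

Lemma cf_q_le th j j' : irrational th -> (j <= j')%nat -> (cf_q th j <= cf_q th j')%Z.
Proof.
  intros Hi H. induction H. lia.
  pose proof (cf_invariant_all th Hi (S m)) as [_ [_ [H' _]]]. rewrite cf_qprev_S in H'. lia.
Qed.

Lemma cf_delta_bounds th k : irrational th ->
  Rabs (cf_delta th k) <= / IZR (cf_q th (S k)) /\
  / (2 * IZR (cf_q th (S k))) <= Rabs (cf_delta th k).
Proof.
  intros Hi. pose proof (cf_invariant_all th Hi (S k)) as [H1 [_ [_ [_ [_ [H6 H7]]]]]].
  unfold cf_delta_prev in H6, H7. rewrite cf_qprev_S, cf_pprev_S in H6, H7.
  fold (cf_delta th k) in H6, H7. rewrite H6 in H7.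
  pose proof (cf_rem_bounds th (S k)) as Hb.
  pose proof (cf_q_le th k (S k) Hi ltac:(lia)) as H. pose proof (cf_q_ge_1 th k Hi) as H0.
  apply IZR_le in H. apply IZR_le in H0. apply IZR_le in H1.
  set (x := cf_rem th (S k)) in *. set (q1 := IZR (cf_q th (S k))) in *.
  set (q0 := IZR (cf_q th k)) in *. set (d := cf_delta th k) in *.
  assert (Hpos : 0 < q1 + q0 * x) by nra.
  assert (E : Rabs d * (q1 + q0 * x) = 1).
  { assert (E0 : (d * (q1 + q0 * x)) ^ 2 = 1) by (rewrite <- H7; ring).
    rewrite <- (Rabs_pos_eq (q1 + q0 * x)) by lra. rewrite <- Rabs_mult.
    assert (Rabs (d * (q1 + q0 * x)) ^ 2 = 1) by (rewrite RPow_abs, E0; apply Rabs_R1).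
    pose proof (Rabs_pos (d * (q1 + q0 * x))). nra. }
  pose proof (Rabs_pos d).
  split.
  - apply Rmult_le_reg_r with q1. lra. rewrite Rinv_l by lra. nra.
  - apply Rmult_le_reg_r with (2 * q1). lra. rewrite Rinv_l by lra. nra.
Qed.

(** * An admissible subsequence of denominators *)

(* The gap condition
   makes a single term dominate the lacunary series; the upper bound on delta
   makes the coefficients 1 - e^{2 pi i Q n theta} super-exponentially small. *)
Record admissible (th : R) (Q : nat -> nat) (delta : nat -> R) : Prop := {
  adm_index : forall n, (n + 1 <= Q n)%nat;
  adm_gap : forall n, (Q n + 1 + (n + 2) ^ 3 * (Q n + 1) <= Q (S n))%nat;
  adm_delta : forall n, exists p : Z, INR (Q n) * th = IZR p + delta n;
  adm_delta_upper : forall n, Rabs (delta n) <= (/ (4 * (INR n + 1))) ^ Q n;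
  adm_delta_lower : forall n, / (2 * INR (Q (S n))) <= Rabs (delta n) }.

Definition cf_growth th n := ln (IZR (cf_q th (S n))) / IZR (cf_q th n).

Definition growth_index th (M : R) : nat :=
  epsilon (inhabits 0%nat) (fun N => forall n, (N <= n)%nat -> M < cf_growth th n).

Lemma growth_index_spec th M n : cv_infty (cf_growth th) ->
  (growth_index th M <= n)%nat -> M < cf_growth th n.
Proof.
  intros H. unfold growth_index.
  apply (epsilon_spec (inhabits 0%nat) (fun N => forall n, (N <= n)%nat -> M < cf_growth th n)).
  apply H.
Qed.

Definition cf_select_bound n := ln (4 * (INR n + 1)).

Fixpoint cf_select th n : nat :=
  match n with
  | O => Nat.max 1 (growth_index th (cf_select_bound 0))
  | S m =>
      let q := Z.to_nat (cf_q th (cf_select th m)) in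
      Nat.max (S (cf_select th m))
        (Nat.max (growth_index th (cf_select_bound (S m))) (q + 1 + (m + 2) ^ 3 * (q + 1)))
  end.

Section Selection.

Variable th : R.
Hypothesis Hirr : irrational th.
Hypothesis Hgrowth : cv_infty (cf_growth th).

Let k := cf_select th.
Let Q n := Z.to_nat (cf_q th (k n)).

Lemma cf_select_lt n : (k n < k (S n))%nat.
Proof. unfold k. cbn [cf_select]. lia. Qed.

Lemma cf_select_ge n : (n + 1 <= k n)%nat.
Proof.
  induction n. unfold k. cbn [cf_select]. lia.
  pose proof (cf_select_lt n). lia.
Qed.

Lemma cf_select_growth n : (growth_index th (cf_select_bound n) <= k n)%nat.
Proof. unfold k. destruct n; cbn [cf_select]; lia. Qed.

Lemma INR_cf_select_q n : INR (Q n) = IZR (cf_q th (k n)).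
Proof.
  unfold Q. rewrite INR_IZR_INZ, Z2Nat.id. reflexivity.
  pose proof (cf_q_ge_1 th (k n) Hirr). lia.
Qed.

Lemma cf_select_le_q n : (k n <= Q n)%nat.
Proof. unfold Q. pose proof (cf_q_ge_index th (k n) Hirr). lia. Qed.

(* ln q_{k+1} > Q ln (4 (n + 1)), i.e. q_{k+1} > (4 (n + 1))^Q *)
Lemma cf_select_delta_upper n :
  Rabs (cf_delta th (k n)) <= (/ (4 * (INR n + 1))) ^ Q n.
Proof.
  destruct (cf_delta_bounds th (k n) Hirr) as [Hd _].
  pose proof (growth_index_spec th _ _ Hgrowth (cf_select_growth n)) as H.
  unfold cf_growth, cf_select_bound in H. rewrite <- INR_cf_select_q in H.
  pose proof (cf_q_ge_1 th (S (k n)) Hirr) as Hq1. apply IZR_le in Hq1.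
  pose proof (cf_select_le_q n). pose proof (cf_select_ge n).
  assert (HQ : 0 < INR (Q n)) by (apply lt_0_INR; lia).
  pose proof (pos_INR n).
  apply Rmult_lt_compat_r with (r := INR (Q n)) in H; auto.
  unfold Rdiv in H. rewrite Rmult_assoc, Rinv_l, Rmult_1_r, Rmult_comm, <- ln_pow in H by lra.
  apply ln_lt_inv in H; [| apply pow_lt; lra | lra].
  rewrite pow_inv. eapply Rle_trans. exact Hd.
  left. apply Rinv_lt_contravar; auto. apply Rmult_lt_0_compat; [apply pow_lt |]; lra.
Qed.

Lemma cf_admissible : admissible th Q (fun n => cf_delta th (k n)).
Proof.
  split.
  - intros n. pose proof (cf_select_le_q n). pose proof (cf_select_ge n). lia.
  - intros n. pose proof (cf_select_le_q (S n)) as H.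
    change (k (S n)) with (Nat.max (S (k n)) (Nat.max (growth_index th (cf_select_bound (S n)))
      (Q n + 1 + (n + 2) ^ 3 * (Q n + 1)))) in H.
    lia.
  - intros n. exists (cf_p th (k n)). rewrite INR_cf_select_q. unfold cf_delta. ring.
  - apply cf_select_delta_upper.
  - intros n. destruct (cf_delta_bounds th (k n) Hirr) as [_ Hd].
    eapply Rle_trans; [|exact Hd]. rewrite INR_cf_select_q.
    pose proof (cf_q_ge_1 th (S (k n)) Hirr) as Hq. apply IZR_le in Hq.
    pose proof (cf_q_le th (S (k n)) (k (S n)) Hirr (cf_select_lt n)) as Hm. apply IZR_le in Hm.
    apply Rinv_le_contravar; lra.
Qed.

End Selection.

(** * The automorphisms *)

Lemma INR_succ_sqr_le_pow4 m : (INR m + 1) ^ 2 <= 4 ^ m.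
Proof.
  induction m. simpl. lra.
  rewrite S_INR. simpl pow in *. pose proof (pos_INR m). nra.
Qed.

(* With P = (q + 1) R^(q + 1), Bernoulli gives R^Q' >= (i + 2)^3 (R - 1) P,
   which beats the i + 1 earlier terms, each at most 2 U P. *)
Lemma gap_dominates R U T B i q Q' : 1 < R -> 0 <= U -> 0 <= T -> 0 <= B ->
  (q + 1 + (i + 2) ^ 3 * (q + 1) <= Q')%nat -> 2 * U + T + B + 1 <= (INR i + 2) * (R - 1) ->
  B + 1 <= / (INR i + 2) * R ^ Q' - INR (S i) * (2 * U * (INR q + 1) * R ^ S q) - T.
Proof.
  intros HR HU HT HB Hgap Hi. rewrite S_INR.
  set (g := ((i + 2) ^ 3 * (q + 1))%nat).
  assert (Hg : INR g = (INR i + 2) ^ 3 * (INR q + 1)).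
  { unfold g. rewrite mult_INR, pow_INR, !plus_INR. simpl. ring. }
  pose proof (pos_INR i). pose proof (pos_INR q).
  assert (Hpow : R ^ S q * R ^ g <= R ^ Q') by (rewrite <- pow_add; apply Rle_pow; [lra | unfold g; lia]).
  pose proof (Rle_pow_lin (R - 1) g ltac:(lra)) as Hb. replace (1 + (R - 1)) with R in Hb by ring.
  assert (HRq : 1 <= R ^ S q) by (apply pow_R1_Rle; lra).
  set (P := (INR q + 1) * R ^ S q).
  assert (HP : 1 <= P) by (unfold P; nra).
  assert (E1 : (INR i + 2) ^ 2 * (R - 1) * P <= / (INR i + 2) * R ^ Q').
  { apply Rmult_le_reg_l with (INR i + 2). lra.
    replace ((INR i + 2) * (/ (INR i + 2) * R ^ Q')) with (R ^ Q') by (field; lra).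
    eapply Rle_trans. 2: exact Hpow. unfold P.
    replace ((INR i + 2) * ((INR i + 2) ^ 2 * (R - 1) * ((INR q + 1) * R ^ S q)))
      with (R ^ S q * (INR g * (R - 1))) by (rewrite Hg; ring).
    apply Rmult_le_compat_l; lra. }
  assert (E2 : (INR i + 1) * (2 * U * (INR q + 1) * R ^ S q) <= (INR i + 2) * (2 * U) * P).
  { unfold P. replace ((INR i + 1) * (2 * U * (INR q + 1) * R ^ S q))
      with ((INR i + 1) * (2 * U) * ((INR q + 1) * R ^ S q)) by ring.
    apply Rmult_le_compat_r. nra. apply Rmult_le_compat_r; lra. }
  assert (E3 : (INR i + 2) * (2 * U + T + B + 1) * P <= (INR i + 2) ^ 2 * (R - 1) * P).
  { replace ((INR i + 2) ^ 2 * (R - 1) * P) with ((INR i + 2) * ((INR i + 2) * (R - 1)) * P) by ring.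
    apply Rmult_le_compat_r. lra. apply Rmult_le_compat_l; lra. }
  assert (E4 : T + B + 1 <= (INR i + 2) * (T + B + 1) * P).
  { replace ((INR i + 2) * (T + B + 1) * P) with ((T + B + 1) * ((INR i + 2) * P)) by ring.
    rewrite <- (Rmult_1_r (T + B + 1)) at 1. apply Rmult_le_compat_l; nra. }
  nra.
Qed.

Section Dynamics.

Variables (th : R) (Q : nat -> nat) (delta : nat -> R).
Hypothesis Hadm : admissible th Q delta.

Let lam := Ce th.
Let eps n := (/ (4 * (INR n + 1))) ^ Q n.

Lemma adm_Q_lt n : (Q n < Q (S n))%nat.
Proof. pose proof (adm_gap _ _ _ Hadm n). lia. Qed.

Lemma adm_Q_le n m : (n <= m)%nat -> (Q n <= Q m)%nat.
Proof. intros H. induction H. lia. pose proof (adm_Q_lt m). lia. Qed.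

Lemma eps_ge_0 n : 0 <= eps n.
Proof. apply pow_le. left. apply Rinv_0_lt_compat. pose proof (pos_INR n). lra. Qed.

Lemma Cnorm_lam_pow N : Cnorm (Cpow lam N) = 1.
Proof. unfold lam. rewrite Cnorm_pow, Cnorm_Ce. apply pow1. Qed.

Lemma lam_pow_Q n : Cpow lam (Q n) = Ce (delta n).
Proof.
  unfold lam. rewrite Cpow_Ce. destruct (adm_delta _ _ _ Hadm n) as [p ->].
  rewrite Ce_add, Ce_IZR. cring.
Qed.

Lemma Cnorm_1_sub_lam_pow_Q n : Cnorm (Csub C1 (Cpow lam (Q n))) <= 2 * PI * eps n.
Proof.
  rewrite lam_pow_Q. eapply Rle_trans. apply Cnorm_1_sub_Ce_le.
  apply Rmult_le_compat_l. pose proof PI_RGT_0. lra. apply (adm_delta_upper _ _ _ Hadm).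
Qed.

(* (Q + 1)^2 (4 (n + 1))^(-Q) r^Q <= (r / (n + 1))^Q <= 2^(-Q) <= 2^(-n) *)
Lemma eps_weighted_le r n : 0 <= r -> 2 * r <= INR n + 1 ->
  (INR (Q n) + 1) ^ 2 * eps n * r ^ Q n <= (1 / 2) ^ n.
Proof.
  intros Hr Hn. pose proof (pos_INR n). pose proof (eps_ge_0 n). pose proof (pow_le r (Q n) Hr).
  pose proof (INR_succ_sqr_le_pow4 (Q n)).
  apply Rle_trans with (4 ^ Q n * eps n * r ^ Q n).
  { apply Rmult_le_compat_r; auto. apply Rmult_le_compat_r; auto. }
  unfold eps. rewrite <- !Rpow_mult_distr.
  replace (4 * / (4 * (INR n + 1)) * r) with (r / (INR n + 1)) by (field; lra).
  apply Rle_trans with ((1 / 2) ^ Q n).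
  - apply pow_incr. split. apply Rdiv_le_0_compat; lra.
    apply Rmult_le_reg_r with (INR n + 1). lra. field_simplify; lra.
  - apply pow_le_pow_le_1. lra. pose proof (adm_index _ _ _ Hadm n). lia.
Qed.

Lemma lac_summable_of_small b K : 0 <= K ->
  (forall n, Cnorm (b n) <= K * Cnorm (Csub C1 (Cpow lam (Q n)))) ->
  forall r, 0 <= r -> lac_summable Q b r.
Proof.
  intros HK Hb r Hr. destruct (INR_unbounded (2 * r)) as [n0 Hn0].
  apply (ex_series_incr_n (lac_majorant Q b r) n0).
  apply (@ex_series_le R_AbsRing R_CompleteNormedModule _ (fun k => K * (2 * PI) * (1 / 2) ^ (n0 + k))).
  - intros k. change (norm ?x) with (Rabs x). rewrite Rabs_pos_eq by (apply lac_majorant_ge_0; lra).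
    set (n := (n0 + k)%nat). unfold lac_majorant.
    assert (Hn : 2 * r <= INR n + 1) by (unfold n; rewrite plus_INR; pose proof (pos_INR k); lra).
    pose proof (eps_weighted_le r n Hr Hn). pose proof (Cnorm_1_sub_lam_pow_Q n).
    pose proof (Hb n). pose proof (Cnorm_ge_0 (Csub C1 (Cpow lam (Q n)))).
    pose proof (pow_le r (Q n) Hr). pose proof (eps_ge_0 n). pose proof PI_RGT_0.
    assert (Cnorm (b n) <= K * (2 * PI) * eps n).
    { eapply Rle_trans. eauto. rewrite Rmult_assoc. now apply Rmult_le_compat_l. }
    assert (0 <= (INR (Q n) + 1) ^ 2 * r ^ Q n) by (apply Rmult_le_pos; auto; apply pow2_ge_0).
    apply Rle_trans with (K * (2 * PI) * ((INR (Q n) + 1) ^ 2 * eps n * r ^ Q n)).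
    + replace (K * (2 * PI) * ((INR (Q n) + 1) ^ 2 * eps n * r ^ Q n))
        with (K * (2 * PI) * eps n * ((INR (Q n) + 1) ^ 2 * r ^ Q n)) by ring.
      rewrite Rmult_assoc. now apply Rmult_le_compat_r.
    + apply Rmult_le_compat_l; auto. apply Rmult_le_pos; lra.
  - apply ex_series_ext with (fun k => scal (K * (2 * PI) * (1 / 2) ^ n0) ((1 / 2) ^ k)).
    { intros k. rewrite pow_add. unfold scal; simpl. unfold mult; simpl. ring. }
    apply (@ex_series_scal_l R_AbsRing R_NormedModule). apply ex_series_geom.
    rewrite Rabs_pos_eq; lra.
Qed.

Variables (u : nat -> CC) (U : R).
Hypothesis HU : forall m, Cnorm (u m) <= U.

Lemma U_ge_0 : 0 <= U.
Proof. pose proof (HU 0%nat). pose proof (Cnorm_ge_0 (u 0%nat)). lra. Qed.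

(* the coefficients of the N-th iterate *)
Definition coef (N n : nat) : CC := Cmul (u (Q n)) (Csub C1 (Cpow lam (N * Q n))).

Lemma Cnorm_coef_le N n : Cnorm (coef N n) <= U * INR N * Cnorm (Csub C1 (Cpow lam (Q n))).
Proof.
  unfold coef. rewrite Cnorm_mul, Nat.mul_comm, Cpow_mul, Rmult_assoc.
  apply Rmult_le_compat; auto using Cnorm_ge_0.
  apply Cnorm_1_sub_pow_le, Cnorm_lam_pow.
Qed.

Lemma Cnorm_coef_le_2U N n : Cnorm (coef N n) <= 2 * U.
Proof.
  unfold coef. rewrite Cnorm_mul. pose proof (Cnorm_1_sub_le _ (Cnorm_lam_pow (N * Q n))).
  pose proof (HU (Q n)). pose proof (Cnorm_ge_0 (u (Q n))).
  pose proof (Cnorm_ge_0 (Csub C1 (Cpow lam (N * Q n)))). nra.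
Qed.

Lemma lac_summable_coef N r : 0 <= r -> lac_summable Q (coef N) r.
Proof.
  apply lac_summable_of_small with (U * INR N).
  - pose proof U_ge_0. pose proof (pos_INR N). nra.
  - apply Cnorm_coef_le.
Qed.

Let mu := Ce (- th).

Definition coef_inv (n : nat) : CC := Cmul (u (Q n)) (Csub C1 (Cpow mu (Q n))).

Lemma lac_summable_coef_inv r : 0 <= r -> lac_summable Q coef_inv r.
Proof.
  apply lac_summable_of_small with U. apply U_ge_0.
  intros n. unfold coef_inv, mu, lam. rewrite Cnorm_mul, !Cpow_Ce.
  replace (INR (Q n) * - th) with (- (INR (Q n) * th)) by ring. rewrite Cnorm_1_sub_Ce_opp.
  apply Rmult_le_compat_r. apply Cnorm_ge_0. apply HU.
Qed.

Lemma lac_summable_u_disc r : 0 <= r < 1 -> lac_summable Q (fun n => u (Q n)) r.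
Proof.
  apply lac_summable_unit_disc with U. intros n. pose proof (adm_index _ _ _ Hadm n). lia.
  intros n. apply HU.
Qed.

Lemma lac_summable_opp_u_disc r : 0 <= r < 1 -> lac_summable Q (fun n => Defs.Copp (u (Q n))) r.
Proof.
  apply lac_summable_unit_disc with U. intros n. pose proof (adm_index _ _ _ Hadm n). lia.
  intros n. rewrite Cnorm_opp. apply HU.
Qed.

Definition phi (z : CC) : CC := Cmul lam (lac_sum Q (coef 1) z).

Lemma phi_term_coef z n : phi_term th Q u z n = Cmul (coef 1 n) (Cpow z (Q n)).
Proof. unfold phi_term, coef, lam. now rewrite Nat.mul_1_l, Cpow_Ce. Qed.

Lemma phi_series_cv z :
  Ccv (fun N => Cmul (Cmul z lam) (Csum (phi_term th Q u z) N)) (phi z).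
Proof.
  pose proof (Cnorm_ge_0 z) as Hz.
  assert (Hsum : is_Cseries (phi_term th Q u z) (Cseries (phi_term th Q u z))).
  { apply Cseries_correct.
    apply (@ex_series_le R_AbsRing R_CompleteNormedModule _ (lac_majorant Q (coef 1) (Cnorm z))).
    2: now apply lac_summable_coef.
    intros n. change (norm ?x) with (Rabs x). rewrite Rabs_pos_eq by apply Cnorm_ge_0.
    unfold lac_majorant. rewrite phi_term_coef, Cnorm_mul, Cnorm_pow.
    pose proof (Cnorm_ge_0 (coef 1 n)). pose proof (pow_le (Cnorm z) (Q n) Hz).
    pose proof (pos_INR (Q n)).
    rewrite Rmult_assoc, (Rmult_comm (_ ^ 2)), <- Rmult_assoc.
    rewrite <- (Rmult_1_r (_ * Cnorm z ^ Q n)) at 1.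
    apply Rmult_le_compat_l. nra. nra. }
  replace (phi z) with (Cmul (Cmul z lam) (Cseries (phi_term th Q u z))).
  - apply Ccv_scal, Ccv_of_is_Cseries, Hsum.
  - unfold phi, lac_sum.
    rewrite (Cseries_unique (lac_term Q (coef 1) z) (Cmul z (Cseries (phi_term th Q u z)))). cring.
    eapply is_Cseries_ext. 2: apply (is_Cseries_scal z _ _ Hsum).
    intros n. cbv beta. rewrite phi_term_coef. unfold lac_term. simpl Cpow. cring.
Qed.

Lemma A_map_phi p : A_map th phi p = skew Q lam (coef 1) p.
Proof. destruct p as [w z]. unfold A_map, skew, phi, lam; simpl. f_equal. cring. Qed.

Lemma lac_sum_coef_S N z :
  Cmul (Cpow lam N) (lac_sum Q (coef (S N)) z) =
  Cadd (Cmul (Cpow lam N) (lac_sum Q (coef N) z)) (lac_sum Q (coef 1) (Cmul (Cpow lam N) z)).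
Proof.
  set (X := Cpow lam N). pose proof (Cnorm_ge_0 z).
  rewrite lac_sum_rotate, <- (lac_sum_scal Q (coef (S N)) X (Cnorm z) z)
    by (auto using lac_summable_coef; lra).
  rewrite (lac_sum_lincomb Q _ (coef N) (fun n => Cmul (coef 1 n) (Cpow X (S (Q n)))) X C1 (Cnorm z));
    try lra.
  - cring.
  - now apply lac_summable_coef.
  - apply lac_summable_rotate. lra. apply Cnorm_lam_pow. now apply lac_summable_coef.
  - intros n. unfold coef. rewrite Nat.mul_1_l.
    change (S N * Q n)%nat with (Q n + N * Q n)%nat. rewrite Cpow_add.
    simpl Cpow. unfold X. rewrite <- Cpow_mul. cring.
Qed.

Lemma iter_A_map N p : Nat.iter N (A_map th phi) p = skew Q (Cpow lam N) (coef N) p.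
Proof.
  induction N.
  - destruct p as [w z]. unfold skew; simpl. rewrite lac_sum_0. f_equal; cring.
    intros n. unfold coef. simpl. cring.
  - simpl Nat.iter. rewrite IHN, A_map_phi. destruct p as [w z]. unfold skew; simpl.
    pose proof (lac_sum_coef_S N z) as H. f_equal; [|cring].
    replace (Cmul (Cmul lam (Cpow lam N)) (Cadd w (lac_sum Q (coef (S N)) z)))
      with (Cmul lam (Cadd (Cmul (Cpow lam N) w) (Cmul (Cpow lam N) (lac_sum Q (coef (S N)) z))))
      by cring.
    rewrite H. cring.
Qed.

Lemma lam_mu : Cmul lam mu = C1.
Proof. unfold lam, mu. rewrite <- Ce_add, Rplus_opp_r. apply Ce_0. Qed.

Lemma lam_mu_pow k : Cmul (Cpow lam k) (Cpow mu k) = C1.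
Proof. rewrite <- Cpow_mul_l, lam_mu. apply Cpow_C1. Qed.

Definition A_inv : C2 -> C2 := skew Q mu coef_inv.

Lemma A_inv_A p : A_inv (A_map th phi p) = p.
Proof.
  rewrite A_map_phi. destruct p as [w z]. unfold A_inv, skew; simpl.
  pose proof (Cnorm_ge_0 z).
  assert (Hcancel : Cadd (Cmul lam (lac_sum Q (coef 1) z)) (lac_sum Q coef_inv (Cmul lam z)) = C0).
  { rewrite lac_sum_rotate, <- (lac_sum_0 Q (fun _ => C0) z) by auto. symmetry.
    rewrite (lac_sum_lincomb Q (fun _ => C0) (coef 1)
      (fun n => Cmul (coef_inv n) (Cpow lam (S (Q n)))) lam C1 (Cnorm z) z); try lra.
    - cring.
    - now apply lac_summable_coef.
    - apply lac_summable_rotate. lra. apply Cnorm_Ce. now apply lac_summable_coef_inv.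
    - intros n. unfold coef, coef_inv. rewrite Nat.mul_1_l. simpl Cpow.
      pose proof (lam_mu_pow (Q n)) as E. revert E.
      generalize (Cpow lam (Q n)) (Cpow mu (Q n)). intros L M E.
      replace (Cmul (Cmul (u (Q n)) (Csub C1 M)) (Cmul lam L))
        with (Cmul (Cmul (u (Q n)) lam) (Csub L (Cmul L M))) by cring.
      rewrite E. cring. }
  f_equal.
  - replace (Cmul mu (Cadd (Cmul lam (Cadd w (lac_sum Q (coef 1) z))) (lac_sum Q coef_inv (Cmul lam z))))
      with (Cadd (Cmul (Cmul lam mu) w)
              (Cmul mu (Cadd (Cmul lam (lac_sum Q (coef 1) z)) (lac_sum Q coef_inv (Cmul lam z)))))
      by cring.
    rewrite Hcancel, lam_mu. cring.
  - replace (Cmul mu (Cmul lam z)) with (Cmul (Cmul lam mu) z) by cring. rewrite lam_mu. cring.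
Qed.

Lemma A_A_inv p : A_map th phi (A_inv p) = p.
Proof.
  rewrite A_map_phi. destruct p as [w z]. unfold A_inv, skew; simpl.
  pose proof (Cnorm_ge_0 z).
  assert (Hcancel : Cadd (lac_sum Q coef_inv z) (Cmul lam (lac_sum Q (coef 1) (Cmul mu z))) = C0).
  { rewrite lac_sum_rotate, <- (lac_sum_0 Q (fun _ => C0) z) by auto. symmetry.
    rewrite (lac_sum_lincomb Q (fun _ => C0) coef_inv
      (fun n => Cmul (coef 1 n) (Cpow mu (S (Q n)))) C1 lam (Cnorm z) z); try lra.
    - cring.
    - now apply lac_summable_coef_inv.
    - apply lac_summable_rotate. lra. apply Cnorm_Ce. now apply lac_summable_coef.
    - intros n. unfold coef, coef_inv. rewrite Nat.mul_1_l. simpl Cpow.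
      pose proof (lam_mu_pow (Q n)) as E. pose proof lam_mu as E1. revert E E1.
      generalize (Cpow lam (Q n)) (Cpow mu (Q n)). intros L M E E1.
      replace (Cmul lam (Cmul (Cmul (u (Q n)) (Csub C1 L)) (Cmul mu M)))
        with (Cmul (Cmul (u (Q n)) (Cmul lam mu)) (Csub M (Cmul L M))) by cring.
      rewrite E, E1. cring. }
  f_equal.
  - replace (Cmul lam (Cadd (Cmul mu (Cadd w (lac_sum Q coef_inv z))) (lac_sum Q (coef 1) (Cmul mu z))))
      with (Cadd (Cmul (Cmul lam mu) (Cadd w (lac_sum Q coef_inv z)))
              (Cmul lam (lac_sum Q (coef 1) (Cmul mu z)))) by cring.
    rewrite lam_mu.
    replace (Cadd (Cmul C1 (Cadd w (lac_sum Q coef_inv z))) (Cmul lam (lac_sum Q (coef 1) (Cmul mu z))))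
      with (Cadd w (Cadd (lac_sum Q coef_inv z) (Cmul lam (lac_sum Q (coef 1) (Cmul mu z))))) by cring.
    rewrite Hcancel. cring.
  - replace (Cmul lam (Cmul mu z)) with (Cmul (Cmul lam mu) z) by cring. rewrite lam_mu. cring.
Qed.

Definition conj_map : C2 -> C2 := skew Q C1 (fun n => u (Q n)).
Definition conj_map_inv : C2 -> C2 := skew Q C1 (fun n => Defs.Copp (u (Q n))).

Lemma lac_sum_opp_u z : Cnorm z < 1 ->
  lac_sum Q (fun n => Defs.Copp (u (Q n))) z = Defs.Copp (lac_sum Q (fun n => u (Q n)) z).
Proof.
  intros Hz. pose proof (Cnorm_ge_0 z).
  rewrite (lac_sum_lincomb Q _ (fun n => u (Q n)) (fun n => u (Q n)) (Defs.Copp C1) C0 (Cnorm z) z); try lra.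
  - cring.
  - apply lac_summable_u_disc. lra.
  - apply lac_summable_u_disc. lra.
  - intros n. cring.
Qed.

Lemma conj_map_inv_conj_map p : CxDisk p -> conj_map_inv (conj_map p) = p.
Proof.
  destruct p as [w z]. unfold CxDisk; simpl. intros Hz.
  unfold conj_map_inv, conj_map, skew; simpl.
  replace (Cmul C1 z) with z by cring. rewrite lac_sum_opp_u by auto.
  f_equal; cring.
Qed.

Lemma conj_map_conj_map_inv p : CxDisk p -> conj_map (conj_map_inv p) = p.
Proof.
  destruct p as [w z]. unfold CxDisk; simpl. intros Hz.
  unfold conj_map_inv, conj_map, skew; simpl.
  replace (Cmul C1 z) with z by cring. rewrite lac_sum_opp_u by auto.
  f_equal; cring.
Qed.

Lemma A_map_conj p : CxDisk p -> A_map th phi p = conj_map_inv (Rot th (conj_map p)).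
Proof.
  destruct p as [w z]. unfold CxDisk; simpl. intros Hz. pose proof (Cnorm_ge_0 z).
  rewrite A_map_phi. unfold conj_map_inv, conj_map, Rot, skew; simpl.
  replace (Cmul (Ce th) (Cmul C1 z)) with (Cmul lam z) by (unfold lam; cring).
  rewrite lac_sum_rotate.
  assert (Hsplit : Cmul lam (lac_sum Q (coef 1) z) =
    Cadd (Cmul lam (lac_sum Q (fun n => u (Q n)) z))
      (Cmul C1 (lac_sum Q (fun n => Cmul (Defs.Copp (u (Q n))) (Cpow lam (S (Q n)))) z))).
  { rewrite <- (lac_sum_scal Q (coef 1) lam (Cnorm z) z) by (auto using lac_summable_coef; lra).
    apply (lac_sum_lincomb Q _ _ _ _ _ (Cnorm z)); try lra.
    - apply lac_summable_u_disc. lra.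
    - apply lac_summable_rotate. lra. apply Cnorm_Ce. apply lac_summable_opp_u_disc. lra.
    - intros n. unfold coef. rewrite Nat.mul_1_l. simpl Cpow. cring. }
  f_equal.
  - replace (Cmul lam (Cadd w (lac_sum Q (coef 1) z)))
      with (Cadd (Cmul lam w) (Cmul lam (lac_sum Q (coef 1) z))) by cring.
    rewrite Hsplit. unfold lam. cring.
  - unfold lam. cring.
Qed.

Lemma eps_le_half_pow j : eps j <= (1 / 2) ^ j.
Proof.
  pose proof (pos_INR j). pose proof (adm_index _ _ _ Hadm j).
  apply Rle_trans with ((1 / 2) ^ Q j).
  - apply pow_incr. split. left. apply Rinv_0_lt_compat. lra.
    replace (1 / 2) with (/ 2) by field. apply Rinv_le_contravar; lra.
  - apply pow_le_pow_le_1. lra. lia.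
Qed.

Lemma eps_le_eighth j : (1 <= j)%nat -> eps j <= 1 / 8.
Proof.
  intros Hj. assert (1 <= INR j) by (apply (le_INR 1); lia). pose proof (adm_index _ _ _ Hadm j).
  apply Rle_trans with ((/ (4 * (INR j + 1))) ^ 1).
  - apply pow_le_pow_le_1. split. left. apply Rinv_0_lt_compat. lra.
    rewrite <- Rinv_1. apply Rinv_le_contravar; lra. lia.
  - rewrite pow_1. replace (1 / 8) with (/ 8) by field. apply Rinv_le_contravar; lra.
Qed.

Lemma Cnorm_coef_le_eps N n : (N <= Q n)%nat -> Cnorm (coef N n) <= 2 * PI * U * INR (Q n) * eps n.
Proof.
  intros HN. pose proof U_ge_0. pose proof PI_RGT_0. pose proof (eps_ge_0 n).
  pose proof (Cnorm_coef_le N n). pose proof (Cnorm_1_sub_lam_pow_Q n).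
  pose proof (Cnorm_ge_0 (Csub C1 (Cpow lam (Q n)))). apply le_INR in HN.
  pose proof (pos_INR N).
  eapply Rle_trans. eauto.
  replace (2 * PI * U * INR (Q n) * eps n) with (U * INR (Q n) * (2 * PI * eps n)) by ring.
  apply Rmult_le_compat; auto. apply Rmult_le_pos; auto. apply Rmult_le_compat_l; auto.
Qed.

Lemma coef_terms_tail_le N n z : 1 <= Cnorm z -> (N <= Q n)%nat -> 2 * Cnorm z <= INR n + 1 ->
  Cnorm (lac_term Q (coef N) z n) <= 2 * PI * U * Cnorm z * (1 / 2) ^ n /\
  Cnorm (lac_dterm Q (coef N) z n) <= 2 * PI * U * Cnorm z * (1 / 2) ^ n.
Proof.
  intros Hz HN Hn. set (R := Cnorm z) in *.
  pose proof (Cnorm_coef_le_eps N n HN) as Hc. pose proof (eps_weighted_le R n ltac:(lra) Hn) as Hw.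
  pose proof U_ge_0. pose proof PI_RGT_0. pose proof (eps_ge_0 n). pose proof (pos_INR (Q n)).
  pose proof (pow_le R (Q n) ltac:(lra)). pose proof (Cnorm_ge_0 (coef N n)).
  set (c := 2 * PI * U) in *.
  assert (Hc0 : 0 <= c) by (unfold c; nra).
  assert (Hmain : INR (Q n) * (INR (Q n) + 1) * eps n * R ^ Q n <= (1 / 2) ^ n).
  { eapply Rle_trans. 2: exact Hw. apply Rmult_le_compat_r; auto. apply Rmult_le_compat_r; auto.
    simpl. nra. }
  split.
  - unfold lac_term. rewrite Cnorm_mul, Cnorm_pow. fold R. simpl pow.
    apply Rle_trans with (c * INR (Q n) * eps n * (R * R ^ Q n)).
    + apply Rmult_le_compat_r. nra. exact Hc.
    + replace (c * INR (Q n) * eps n * (R * R ^ Q n))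
        with (c * R * (INR (Q n) * eps n * R ^ Q n)) by ring.
      apply Rmult_le_compat_l. nra. eapply Rle_trans. 2: exact Hmain.
      apply Rmult_le_compat_r; auto. apply Rmult_le_compat_r; auto. nra.
  - unfold lac_dterm. rewrite !Cnorm_mul, Cnorm_pow, Cnorm_RtoC, Rabs_pos_eq, S_INR by apply pos_INR.
    fold R. apply Rle_trans with (c * (INR (Q n) * (INR (Q n) + 1) * eps n * R ^ Q n)).
    + replace (c * (INR (Q n) * (INR (Q n) + 1) * eps n * R ^ Q n))
        with (c * INR (Q n) * eps n * (INR (Q n) + 1) * R ^ Q n) by ring.
      apply Rmult_le_compat_r; auto. apply Rmult_le_compat_r; lra.
    + pose proof (pow_le (1 / 2) n ltac:(lra)).
      apply Rle_trans with (c * (1 / 2) ^ n). now apply Rmult_le_compat_l.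
      replace (c * R * (1 / 2) ^ n) with (c * (1 / 2) ^ n * R) by ring.
      rewrite <- (Rmult_1_r (c * (1 / 2) ^ n)) at 1. apply Rmult_le_compat_l; nra.
Qed.

Lemma Cnorm_coef_Q_head_le j n : (n <= j)%nat ->
  Cnorm (coef (Q j) n) <= 2 * PI * U * INR (Q j) * eps j.
Proof.
  intros Hn. unfold coef. rewrite Cnorm_mul, Cpow_mul.
  pose proof (Cnorm_1_sub_pow_le _ (Q n) (Cnorm_lam_pow (Q j))).
  pose proof (Cnorm_1_sub_lam_pow_Q j). pose proof (HU (Q n)).
  pose proof (Cnorm_ge_0 (u (Q n))). pose proof (Cnorm_ge_0 (Csub C1 (Cpow lam (Q j)))).
  pose proof (Cnorm_ge_0 (Csub C1 (Cpow (Cpow lam (Q j)) (Q n)))).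
  assert (INR (Q n) <= INR (Q j)) by (apply le_INR, adm_Q_le, Hn).
  pose proof (pos_INR (Q n)). pose proof U_ge_0.
  replace (2 * PI * U * INR (Q j) * eps j) with (U * (INR (Q j) * (2 * PI * eps j))) by ring.
  apply Rmult_le_compat; auto. eapply Rle_trans. eauto. apply Rmult_le_compat; lra.
Qed.

(* The coefficients of A^{Q_j} contain 1 - lambda^{Q_j Q_n}, which is small
   for n <= j because lambda^{Q_j} is close to 1. *)
Lemma lac_sum_coef_Q_le j z : 1 <= Cnorm z -> 2 * Cnorm z <= INR j + 1 ->
  Cnorm (lac_sum Q (coef (Q j)) z) <= 4 * PI * U * Cnorm z * (1 / 2) ^ j.
Proof.
  intros Hz Hj. set (R := Cnorm z) in *.
  pose proof U_ge_0. pose proof PI_RGT_0. pose proof (eps_ge_0 j). pose proof (pos_INR (Q j)).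
  pose proof (pow_le R (Q j) ltac:(lra)).
  assert (HT : 0 <= 2 * PI * U * R) by (apply Rmult_le_pos; nra).
  set (head := 2 * PI * U * INR (Q j) * eps j * R ^ S (Q j)).
  apply Rle_trans with (INR (S j) * head + 2 * PI * U * R * (1 / 2) ^ j).
  - apply (is_Cseries_split_le (lac_term Q (coef (Q j)) z)); auto.
    + apply (is_Cseries_lac_sum Q _ R). lra. apply Rle_refl. apply lac_summable_coef. lra.
    + intros n Hn. unfold lac_term, head. rewrite Cnorm_mul, Cnorm_pow. fold R.
      apply Rmult_le_compat; auto using Cnorm_ge_0, pow_le, Cnorm_coef_Q_head_le.
      apply pow_le; lra. apply Rle_pow. lra. pose proof (adm_Q_le n j Hn). lia.
    + intros k. apply coef_terms_tail_le; fold R; auto. apply adm_Q_le. lia.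
      rewrite plus_INR, S_INR. pose proof (pos_INR k). lra.
  - assert (INR (S j) * head <= 2 * PI * U * R * (1 / 2) ^ j).
    { pose proof (eps_weighted_le R j ltac:(lra) Hj).
      assert (INR (S j) <= INR (Q j) + 1)
        by (rewrite <- S_INR; apply le_INR; pose proof (adm_index _ _ _ Hadm j); lia).
      pose proof (pos_INR (S j)).
      unfold head. simpl pow.
      replace (INR (S j) * (2 * PI * U * INR (Q j) * eps j * (R * R ^ Q j)))
        with (2 * PI * U * R * (INR (S j) * INR (Q j) * eps j * R ^ Q j)) by ring.
      apply Rmult_le_compat_l; auto. eapply Rle_trans. 2: eauto.
      apply Rmult_le_compat_r; auto. apply Rmult_le_compat_r; auto. nra. }
    lra.
Qed.

Lemma iter_A_map_Q_dist_le j w z : 1 <= Cnorm z -> 2 * Cnorm z <= INR j + 1 ->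
  C2norm (C2sub (Nat.iter (Q j) (A_map th phi) (w, z)) (w, z))
    <= (2 * PI * (Cnorm w + Cnorm z) + 4 * PI * U * Cnorm z) * (1 / 2) ^ j.
Proof.
  intros Hz Hj. rewrite iter_A_map. unfold skew, C2sub; simpl.
  set (X := Cpow lam (Q j)). set (F := lac_sum Q (coef (Q j)) z).
  assert (HX : Cnorm (Csub C1 X) <= 2 * PI * (1 / 2) ^ j).
  { eapply Rle_trans. apply Cnorm_1_sub_lam_pow_Q.
    apply Rmult_le_compat_l. pose proof PI_RGT_0. lra. apply eps_le_half_pow. }
  pose proof (lac_sum_coef_Q_le j z Hz Hj) as HF. fold F in HF.
  eapply Rle_trans. apply C2norm_le. simpl.
  replace (Csub (Cmul X (Cadd w F)) w) with (Cadd (Cmul (Defs.Copp (Csub C1 X)) w) (Cmul X F)) by cring.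
  replace (Csub (Cmul X z) z) with (Cmul (Defs.Copp (Csub C1 X)) z) by cring.
  pose proof (Cnorm_triangle (Cmul (Defs.Copp (Csub C1 X)) w) (Cmul X F)) as Ht.
  assert (HXn : Cnorm X = 1) by apply Cnorm_lam_pow.
  rewrite !Cnorm_mul, Cnorm_opp, HXn in Ht. rewrite Cnorm_mul, Cnorm_opp.
  pose proof (Cnorm_ge_0 (Csub C1 X)). pose proof (Cnorm_ge_0 w). pose proof (Cnorm_ge_0 z).
  assert (Cnorm (Csub C1 X) * Cnorm w <= 2 * PI * (1 / 2) ^ j * Cnorm w) by (apply Rmult_le_compat_r; auto).
  assert (Cnorm (Csub C1 X) * Cnorm z <= 2 * PI * (1 / 2) ^ j * Cnorm z) by (apply Rmult_le_compat_r; auto).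
  nra.
Qed.

Lemma A_map_recurrent w z : 1 < Cnorm z -> forall e, e > 0 -> forall N0, exists N,
  (N >= N0)%nat /\ C2norm (C2sub (Nat.iter N (A_map th phi) (w, z)) (w, z)) < e.
Proof.
  intros Hz e He N0.
  set (C := 2 * PI * (Cnorm w + Cnorm z) + 4 * PI * U * Cnorm z).
  assert (HC : 0 <= C).
  { pose proof PI_RGT_0. pose proof U_ge_0. pose proof (Cnorm_ge_0 w).
    assert (0 <= PI * U * Cnorm z) by (apply Rmult_le_pos; [apply Rmult_le_pos |]; lra).
    assert (0 <= PI * (Cnorm w + Cnorm z)) by (apply Rmult_le_pos; lra).
    unfold C. lra. }
  destruct (pow_lt_1_zero (1 / 2) ltac:(rewrite Rabs_pos_eq; lra) (e / (C + 1))
    ltac:(apply Rdiv_lt_0_compat; lra)) as [J HJ].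
  destruct (INR_unbounded (2 * Cnorm z)) as [J' HJ'].
  set (j := Nat.max (Nat.max J J') N0).
  exists (Q j). split. { pose proof (adm_index _ _ _ Hadm j). unfold j in *. lia. }
  eapply Rle_lt_trans. apply iter_A_map_Q_dist_le. lra.
  { assert (INR J' <= INR j) by (apply le_INR; unfold j; lia). lra. }
  specialize (HJ j ltac:(unfold j; lia)). rewrite Rabs_pos_eq in HJ by (apply pow_le; lra).
  fold C. apply Rmult_lt_compat_l with (r := C + 1) in HJ; [|lra].
  replace ((C + 1) * (e / (C + 1))) with e in HJ by (field; lra).
  pose proof (pow_le (1 / 2) j ltac:(lra)). nra.
Qed.

(* N = ceil (1 / (6 |delta_j|)) turns lambda^{Q_j} by an angle in [pi/3, 2pi/3];
   the lower bound on delta_j keeps N below Q_{j+1}. *)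
Lemma exists_turning_multiple j : (1 <= j)%nat ->
  exists N, (N <= Q (S j))%nat /\ 1 <= Cnorm (Csub C1 (Cpow lam (N * Q j))).
Proof.
  intros Hj. set (d := delta j).
  assert (Hd : Rabs d <= 1 / 8).
  { pose proof (adm_delta_upper _ _ _ Hadm j) as H. pose proof (eps_le_eighth j Hj).
    fold d in H. unfold eps in *. lra. }
  pose proof (adm_delta_lower _ _ _ Hadm j) as Hlow. fold d in Hlow.
  assert (HQ : 0 < INR (Q (S j))) by (apply lt_0_INR; pose proof (adm_index _ _ _ Hadm (S j)); lia).
  assert (Hd0 : 0 < Rabs d).
  { eapply Rlt_le_trans; [|exact Hlow]. apply Rinv_0_lt_compat. lra. }
  set (x := / (6 * Rabs d)).
  assert (Hx : 1 <= x) by (unfold x; rewrite <- Rinv_1; apply Rinv_le_contravar; lra).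
  assert (Hxd : x * Rabs d = 1 / 6) by (unfold x; field; lra).
  destruct (archimed x) as [Hup1 Hup2].
  exists (Z.to_nat (up x)).
  assert (HN : INR (Z.to_nat (up x)) = IZR (up x)).
  { rewrite INR_IZR_INZ, Z2Nat.id. reflexivity. apply le_IZR. lra. }
  split.
  - apply INR_le. rewrite HN.
    assert (3 * x <= INR (Q (S j))).
    { apply Rmult_le_reg_r with (2 * Rabs d). lra.
      replace (3 * x * (2 * Rabs d)) with 1 by (unfold x; field; lra).
      apply Rmult_le_compat_l with (r := 2 * INR (Q (S j))) in Hlow; [|lra].
      rewrite Rinv_r in Hlow by lra. lra. }
    lra.
  - rewrite Nat.mul_comm, Cpow_mul, lam_pow_Q, Cpow_Ce. apply Cnorm_1_sub_Ce_ge.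
    rewrite Rabs_mult, Rabs_pos_eq, HN by apply pos_INR. fold d.
    split; [apply Rle_trans with (x * Rabs d) | apply Rle_trans with ((x + 1) * Rabs d)]; nra.
Qed.

Lemma coef_terms_head_le N i n z : 1 <= Cnorm z -> (n <= i)%nat ->
  Cnorm (lac_term Q (coef N) z n) <= 2 * U * (INR (Q i) + 1) * Cnorm z ^ S (Q i) /\
  Cnorm (lac_dterm Q (coef N) z n) <= 2 * U * (INR (Q i) + 1) * Cnorm z ^ S (Q i).
Proof.
  intros Hz Hn. set (R := Cnorm z) in *.
  pose proof (Cnorm_coef_le_2U N n). pose proof (Cnorm_ge_0 (coef N n)).
  pose proof (adm_Q_le n i Hn) as HQ. pose proof (le_INR _ _ HQ). pose proof (pos_INR (Q n)).
  assert (HRn : R ^ S (Q n) <= R ^ S (Q i)) by (apply Rle_pow; [lra | lia]).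
  assert (HRn' : R ^ Q n <= R ^ S (Q i)) by (apply Rle_pow; [lra | lia]).
  pose proof (pow_le R (Q n) ltac:(lra)). pose proof (pow_le R (S (Q n)) ltac:(lra)).
  pose proof (pow_R1_Rle R (S (Q i)) Hz). pose proof U_ge_0.
  split.
  - unfold lac_term. rewrite Cnorm_mul, Cnorm_pow. fold R.
    apply Rle_trans with (2 * U * R ^ S (Q i)). now apply Rmult_le_compat.
    replace (2 * U * (INR (Q i) + 1) * R ^ S (Q i)) with (2 * U * R ^ S (Q i) * (INR (Q i) + 1))
      by ring.
    rewrite <- (Rmult_1_r (2 * U * R ^ S (Q i))) at 1. apply Rmult_le_compat_l; nra.
  - unfold lac_dterm. rewrite !Cnorm_mul, Cnorm_pow, Cnorm_RtoC, Rabs_pos_eq, S_INR by apply pos_INR.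
    fold R. apply Rle_trans with (2 * U * (INR (Q n) + 1) * R ^ Q n).
    + apply Rmult_le_compat_r; auto. apply Rmult_le_compat_r; lra.
    + apply Rmult_le_compat; auto. nra. apply Rmult_le_compat_l; lra.
Qed.

Lemma coef_terms_dominant N j z : 1 <= Cnorm z ->
  Cnorm (coef N j) * Cnorm z ^ Q j <= Cnorm (lac_term Q (coef N) z j) /\
  Cnorm (coef N j) * Cnorm z ^ Q j <= Cnorm (lac_dterm Q (coef N) z j).
Proof.
  intros Hz. pose proof (Cnorm_ge_0 (coef N j)). pose proof (pow_le (Cnorm z) (Q j) ltac:(lra)).
  pose proof (pos_INR (Q j)). split.
  - unfold lac_term. rewrite Cnorm_mul, Cnorm_pow. apply Rmult_le_compat_l; auto.
    apply Rle_pow. lra. lia.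
  - unfold lac_dterm. rewrite !Cnorm_mul, Cnorm_pow, Cnorm_RtoC, Rabs_pos_eq, S_INR by apply pos_INR.
    apply Rmult_le_compat_r; auto. rewrite <- (Rmult_1_r (Cnorm (coef N j))) at 1.
    apply Rmult_le_compat_l; lra.
Qed.

Lemma lac_coef_dominant_ge N i z : 1 <= Cnorm z -> 2 * Cnorm z <= INR (S i) + 1 ->
  (N <= Q (S (S i)))%nat ->
  let m := Cnorm (coef N (S i)) * Cnorm z ^ Q (S i)
           - INR (S i) * (2 * U * (INR (Q i) + 1) * Cnorm z ^ S (Q i)) - 2 * PI * U * Cnorm z in
  m <= Cnorm (lac_sum Q (coef N) z) /\ m <= Cnorm (lac_deriv Q (coef N) z).
Proof.
  intros Hz Hi HN m. pose proof (Cnorm_ge_0 z) as Hz0.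
  set (head := 2 * U * (INR (Q i) + 1) * Cnorm z ^ S (Q i)) in m.
  assert (HT : 0 <= 2 * PI * U * Cnorm z).
  { pose proof PI_RGT_0. pose proof U_ge_0. apply Rmult_le_pos; [apply Rmult_le_pos|]; lra. }
  assert (Htail : forall k, (N <= Q (S (S i) + k))%nat /\ 2 * Cnorm z <= INR (S (S i) + k) + 1).
  { intros k. split. eapply Nat.le_trans. exact HN. apply adm_Q_le. lia.
    assert (INR (S i) <= INR (S (S i) + k)) by (apply le_INR; lia). lra. }
  destruct (coef_terms_dominant N (S i) z Hz) as [Hd1 Hd2].
  split.
  - eapply Rle_trans. 2: apply (is_Cseries_dominant_ge (lac_term Q (coef N) z) _ i head _
        (is_Cseries_lac_sum Q _ _ z Hz0 (Rle_refl _) (lac_summable_coef N _ Hz0)) HT).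
    + unfold m. lra.
    + intros n Hn. apply (coef_terms_head_le N i n z Hz Hn).
    + intros k. destruct (Htail k). apply (coef_terms_tail_le N _ z Hz); auto.
  - eapply Rle_trans. 2: apply (is_Cseries_dominant_ge (lac_dterm Q (coef N) z) _ i head _
        (is_Cseries_lac_deriv Q _ _ z Hz0 (Rle_refl _) (lac_summable_coef N _ Hz0)) HT).
    + unfold m. lra.
    + intros n Hn. apply (coef_terms_head_le N i n z Hz Hn).
    + intros k. destruct (Htail k). apply (coef_terms_tail_le N _ z Hz); auto.
Qed.

Lemma lac_coef_unbounded w z M : 1 < Cnorm z ->
  (forall J, exists n, (n >= J)%nat /\ Cnorm (u (Q n)) > / (INR n + 1)) ->
  exists N, M < Cnorm (lac_sum Q (coef N) z) - Cnorm w /\ M < Cnorm (lac_deriv Q (coef N) z).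
Proof.
  intros Hz Hfreq. set (R := Cnorm z) in *.
  pose proof U_ge_0. pose proof PI_RGT_0. pose proof (Cnorm_ge_0 w).
  set (T := 2 * PI * U * R).
  assert (HT : 0 <= T) by (unfold T; apply Rmult_le_pos; [apply Rmult_le_pos |]; lra).
  set (B := Rabs M + Cnorm w + 1).
  assert (HB : 0 <= B) by (unfold B; pose proof (Rabs_pos M); lra).
  destruct (INR_unbounded (2 * R)) as [J1 HJ1].
  destruct (INR_unbounded ((2 * U + T + B + 1) / (R - 1))) as [J2 HJ2].
  destruct (Hfreq (Nat.max (Nat.max J1 J2) 2)) as [[|i] [Hj Huj]]. lia.
  assert (HJ1' : INR J1 <= INR (S i)) by (apply le_INR; lia).
  assert (HJ2' : INR J2 <= INR (S i)) by (apply le_INR; lia).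
  rewrite S_INR in HJ1', HJ2'.
  assert (Hgrow : 2 * U + T + B + 1 <= (INR i + 2) * (R - 1)).
  { apply Rmult_le_reg_r with (/ (R - 1)). apply Rinv_0_lt_compat; lra.
    replace ((INR i + 2) * (R - 1) * / (R - 1)) with (INR i + 2) by (field; lra).
    unfold Rdiv in HJ2. lra. }
  destruct (exists_turning_multiple (S i) ltac:(lia)) as [N [HN Hturn]].
  assert (Hcoef : / (INR (S i) + 1) <= Cnorm (coef N (S i))).
  { unfold coef. rewrite Cnorm_mul. pose proof (Cnorm_ge_0 (u (Q (S i)))). nra. }
  pose proof (lac_coef_dominant_ge N i z ltac:(fold R; lra) ltac:(fold R; rewrite S_INR; lra) HN)
    as [Hsum Hder].
  pose proof (gap_dominates R U T B i (Q i) (Q (S i)) Hz ltac:(lra) HT HB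
    (adm_gap _ _ _ Hadm i) Hgrow) as Hdom.
  assert (Hm : / (INR i + 2) * R ^ Q (S i) <= Cnorm (coef N (S i)) * R ^ Q (S i)).
  { apply Rmult_le_compat_r. apply pow_le; lra.
    replace (INR i + 2) with (INR (S i) + 1) by (rewrite S_INR; ring). exact Hcoef. }
  exists N. fold R in Hsum, Hder. fold T in Hsum, Hder.
  pose proof (Rle_abs M). unfold B in Hdom. split; lra.
Qed.

Lemma A_map_phi_eq : A_map th phi = skew Q lam (coef 1).
Proof. apply functional_extensionality, A_map_phi. Qed.

Lemma A_map_automorphism : holo_automorphism_C2 (A_map th phi).
Proof.
  split.
  - rewrite A_map_phi_eq. apply skew_holomorphic, lac_summable_coef.
  - exists A_inv. split; [|split].
    + apply skew_holomorphic, lac_summable_coef_inv.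
    + apply A_inv_A.
    + apply A_A_inv.
Qed.

Lemma A_map_disc :
  (forall p, CxDisk p -> CxDisk (A_map th phi p)) /\
  (forall p, CxDisk p -> exists p0, CxDisk p0 /\ A_map th phi p0 = p) /\
  exists Psi Phi : C2 -> C2, biholo_of CxDisk Psi Phi /\
    forall p, CxDisk p -> A_map th phi p = Phi (Rot th (Psi p)).
Proof.
  assert (Hrot : forall a b p, Cnorm a = 1 -> CxDisk p -> CxDisk (skew Q a b p)).
  { intros a b [w z] Ha. unfold CxDisk, skew; simpl. rewrite Cnorm_mul, Ha. lra. }
  split; [|split].
  - intros p Hp. rewrite A_map_phi. apply Hrot; auto. apply Cnorm_Ce.
  - intros p Hp. exists (A_inv p). split. apply Hrot; auto. apply Cnorm_Ce. apply A_A_inv.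
  - exists conj_map, conj_map_inv. split.
    + repeat split.
      * intros p. apply Hrot, Cnorm_C1.
      * intros p. apply Hrot, Cnorm_C1.
      * apply conj_map_inv_conj_map.
      * apply conj_map_conj_map_inv.
      * apply skew_holomorphic_disc, lac_summable_u_disc.
      * apply skew_holomorphic_disc, lac_summable_opp_u_disc.
    + apply A_map_conj.
Qed.

Section Outside.

Hypothesis Hfreq : forall J, exists n, (n >= J)%nat /\ Cnorm (u (Q n)) > / (INR n + 1).

Lemma A_map_orbit_outside p : CxOut p ->
  (forall M, exists N, C2norm (Nat.iter N (A_map th phi) p) > M) /\
  (forall e, e > 0 -> forall N0, exists N, (N >= N0)%nat /\
     C2norm (C2sub (Nat.iter N (A_map th phi) p) p) < e).
Proof.
  destruct p as [w z]. unfold CxOut; simpl. intros Hz. split.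
  - intros M. destruct (lac_coef_unbounded w z M Hz Hfreq) as [N [HN _]].
    exists N. rewrite iter_A_map. eapply Rlt_le_trans. 2: apply C2norm_ge_fst.
    unfold skew; simpl. rewrite Cnorm_mul, Cnorm_lam_pow, Rmult_1_l.
    pose proof (Cnorm_add_ge (lac_sum Q (coef N) z) w) as H.
    replace (Cadd (lac_sum Q (coef N) z) w) with (Cadd w (lac_sum Q (coef N) z)) in H by cring.
    lra.
  - apply A_map_recurrent. exact Hz.
Qed.

Lemma A_map_iter_deriv_unbounded p : CxOut p -> forall M, exists N L,
  has_cderiv (Nat.iter N (A_map th phi)) p L /\ Mat2_norm L > M.
Proof.
  destruct p as [w z]. unfold CxOut; simpl. intros Hz M.
  destruct (lac_coef_unbounded w z M Hz Hfreq) as [N [_ HN]].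
  exists N, (skew_jacobian (Cpow lam N) (lac_deriv Q (coef N) z)). split.
  - replace (Nat.iter N (A_map th phi)) with (skew Q (Cpow lam N) (coef N))
      by (apply functional_extensionality; intros p; symmetry; apply iter_A_map).
    apply skew_cderiv with (Cnorm z + 1). lra. apply lac_summable_coef. pose proof (Cnorm_ge_0 z). lra.
  - eapply Rlt_le_trans. 2: apply Mat2_norm_skew_jacobian.
    rewrite Cnorm_mul, Cnorm_lam_pow, Rmult_1_l. lra.
Qed.

End Outside.

End Dynamics.

(** * A residual set of coefficient sequences *)

Definition large_beyond (q' : nat -> nat) (j : nat) (u : nat -> CC) : Prop :=
  linf u /\ exists n, (n >= j)%nat /\ Cnorm (u (q' n)) > / (INR n + 1).

Lemma large_beyond_open q' j : linf_open (large_beyond q' j).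
Proof.
  split. { now intros u [H _]. }
  intros u [Hl [n [Hn Hu]]]. exists (Cnorm (u (q' n)) - / (INR n + 1)). split. lra.
  intros v Hv Hvu. split; auto. exists n. split; auto.
  pose proof (Cnorm_add_ge (u (q' n)) (Csub (v (q' n)) (u (q' n)))) as H.
  replace (Cadd (u (q' n)) (Csub (v (q' n)) (u (q' n)))) with (v (q' n)) in H by cring.
  specialize (Hvu (q' n)). lra.
Qed.

(* Pushing every small entry of v away from 0 by e / 2 makes all entries
   at least e / 4, which beats 1 / (n + 1) for large n. *)
Lemma large_beyond_all_dense q' : linf_dense (fun u => forall j, large_beyond q' j u).
Proof.
  split. { intros u H. apply (H 0%nat). }
  intros v [Mv HMv] e He.
  set (u := fun m => if Rle_dec (Cnorm (v m)) (e / 4) then Cadd (v m) (e / 2, 0) else v m).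
  assert (Hre : Cnorm (e / 2, 0) = e / 2) by (rewrite Cnorm_RtoC, Rabs_pos_eq; lra).
  assert (Hlow : forall m, e / 4 <= Cnorm (u m)).
  { intros m. unfold u. destruct (Rle_dec (Cnorm (v m)) (e / 4)); [|lra].
    pose proof (Cnorm_add_ge (e / 2, 0) (v m)) as H. rewrite Hre in H.
    replace (Cadd (e / 2, 0) (v m)) with (Cadd (v m) (e / 2, 0)) in H by cring. lra. }
  exists u. split.
  - intros j. split.
    + exists (Mv + e / 2). intros m. specialize (HMv m). unfold u.
      destruct (Rle_dec (Cnorm (v m)) (e / 4)); [|lra].
      eapply Rle_trans. apply Cnorm_triangle. lra.
    + destruct (INR_unbounded (4 / e)) as [N HN]. exists (Nat.max j N). split. lia.
      eapply Rlt_le_trans. 2: apply Hlow.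
      assert (INR N <= INR (Nat.max j N)) by (apply le_INR; lia).
      pose proof (pos_INR (Nat.max j N)).
      apply Rmult_lt_reg_r with (INR (Nat.max j N) + 1). lra.
      rewrite Rinv_l by lra.
      replace (e / 4 * (INR (Nat.max j N) + 1)) with ((INR (Nat.max j N) + 1) / (4 / e)) by (field; lra).
      apply Rmult_lt_reg_r with (4 / e). apply Rdiv_lt_0_compat; lra.
      field_simplify; lra.
  - intros m. unfold u. destruct (Rle_dec (Cnorm (v m)) (e / 4)).
    + replace (Csub (Cadd (v m) (e / 2, 0)) (v m)) with (e / 2, 0) by cring. lra.
    + replace (Csub (v m) (v m)) with C0 by cring. rewrite Cnorm_C0. lra.
Qed.

Theorem theorem1 :
  forall (theta : R) (Sset : C2 -> Prop),
    irrational theta ->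
    cv_infty (fun n => ln (IZR (cf_q theta (S n))) / IZR (cf_q theta n)) ->
    (* S is a countable dense subset of C x {|z| > 1} *)
    (forall p, Sset p -> CxOut p) ->
    (exists f : nat -> C2, forall p, Sset p -> exists n, f n = p) ->
    (forall p, CxOut p -> forall eps, eps > 0 ->
        exists s, Sset s /\ C2norm (C2sub s p) < eps) ->
    exists k : nat -> nat,
      (forall n, (k n < k (S n))%nat) /\
      let q' := fun n => Z.to_nat (cf_q theta (k n)) in
      exists E2 : (nat -> CC) -> Prop,
        linf_dense E2 /\ linf_Gdelta E2 /\
        forall u, E2 u ->
          exists phi : CC -> CC,
            (* the defining series converges everywhere, with sum phi *)
            (forall z, Ccv (fun N => Cmul (Cmul z (Ce theta))
                                          (Csum (phi_term theta q' u z) N)) (phi z)) /\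
            let A := A_map theta phi in
            holo_automorphism_C2 A /\
            (* (i) *)
            ((forall p, CxDisk p -> CxDisk (A p)) /\
             (forall p, CxDisk p -> exists p0, CxDisk p0 /\ A p0 = p) /\
             exists Psi Phi : C2 -> C2, biholo_of CxDisk Psi Phi /\
               forall p, CxDisk p -> A p = Phi (Rot theta (Psi p))) /\
            (* (ii) *)
            (forall p, CxOut p ->
               (forall M, exists N, C2norm (Nat.iter N A p) > M) /\
               (forall eps, eps > 0 -> forall N0, exists N, (N >= N0)%nat /\
                   C2norm (C2sub (Nat.iter N A p) p) < eps)) /\
            (* (iii) *)
            (forall p, Sset p -> forall M, exists N L,
               has_cderiv (Nat.iter N A) p L /\ Mat2_norm L > M).
Proof.
  intros th Sset Hirr Hgrowth HS _ _.
  pose proof (cf_admissible th Hirr Hgrowth) as Hadm.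
  exists (cf_select th). split. { apply cf_select_lt. }
  intros q'. exists (fun u => forall j, large_beyond q' j u).
  split. { apply large_beyond_all_dense. }
  split. { exists (large_beyond q'). split. apply large_beyond_open. tauto. }
  intros u Hu. destruct (Hu 0%nat) as [[U HU] _].
  assert (Hfreq : forall J, exists n, (n >= J)%nat /\ Cnorm (u (q' n)) > / (INR n + 1))
    by (intros J; apply (Hu J)).
  exists (phi th q' u). split. { apply (phi_series_cv _ _ _ Hadm _ _ HU). }
  split. { apply (A_map_automorphism _ _ _ Hadm _ _ HU). }
  split. { apply (A_map_disc _ _ _ Hadm _ _ HU). }
  split. { apply (A_map_orbit_outside _ _ _ Hadm _ _ HU Hfreq). }
  intros p Hp. apply (A_map_iter_deriv_unbounded _ _ _ Hadm _ _ HU Hfreq), HS, Hp.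
Qed.
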